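(* Let $\Omega$ be a set; all groups below are $\Omega$-groups. (1) Let $G$ be an $\Omega$-group, $I$ a set, and $(H_i)_{i\in I}$ a family of $\Omega$-subgroups of $G$ satisfying (CC) and such that $\theta^H_G\colon\bigoplus_{i\in I}H_i\to G$ is bijective. Let $S$ be any simple $\Omega$-group. Then: (a) $\operatorname{soc}(H_i)$ is an $\Omega$-subgroup of $\operatorname{soc}(G)$ and $(H_i)_S$ is an $\Omega$-subgroup of $G_S$ for every $i\in I$; (b) the families $(\operatorname{soc}(H_i))_{i\in I}$ (of $\Omega$-subgroups of $\operatorname{soc}(G)$) and $((H_i)_S)_{i\in I}$ (of $\Omega$-subgroups of $G_S$) satisfy (CC); (c) the canonical morphisms $\bigoplus_{i\in I}\operatorname{soc}(H_i)\to\operatorname{soc}(G)$ and $\bigoplus_{i\in I}(H_i)_S\to G_S$ (whose composition with each canonical injection is the corresponding inclusion) are bijective; (d) $\operatorname{Supp}(G)=\bigcup_{i\in I}\operatorname{Supp}(H_i)$. (2) For every $\Omega$-group $G$ and every simple $\Omega$-group $S$, one has $G_S=(\operatorname{soc}(G))_S$ and $\operatorname{Supp}(G)=\operatorname{Supp}(\operatorname{soc}(G))$. (3) Let $G$ and $G'$ be semisimple $\Omega$-groups and put $\mathcal{S}=\operatorname{Supp}(G)\cap\operatorname{Supp}(G')$. Then: (a) for every normal morphism $f\colon G\to G'$ and every simple $\Omega$-group $S$, the $S$-component $f_S\colon G_S\to G'_S$ is a normal morphism; (b) the map $$\Phi\colon \operatorname{Hom}_n(G,G')\to\prod_{S\in\mathcal{S}}\operatorname{Hom}_n(G_S,G'_S),\qquad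 \Phi(f)=(f_S)_{S\in\mathcal{S}},$$ is a bijection.
   Context: An $\Omega$-group is a group $G$ with a map $\Omega\times G\to G$, $(\omega,x)\mapsto x^\omega$, such that each $x\mapsto x^\omega$ is an endomorphism; morphisms are homomorphisms commuting with the operators; $\Omega$-subgroups are operator-stable subgroups. An $\Omega$-group is simple if it is nontrivial and has no normal $\Omega$-subgroups other than the trivial one and itself. For an $\Omega$-group $G$, $\mathcal{Z}(G)$ is the set of normal $\Omega$-subgroups of $G$ that are simple $\Omega$-groups; $\operatorname{soc}(G)$ is the $\Omega$-subgroup generated by $\bigcup\mathcal{Z}(G)$; for a simple $\Omega$-group $S$, $G_S$ is the $\Omega$-subgroup generated by the union of all $H\in\mathcal{Z}(G)$ isomorphic to $S$. For each $\Omega$-group $H$, $[H]$ denotes a canonically chosen representative of its isomorphism class ($[H]\cong H$, $[[H]]=[H]$, $[H]=[K]$ iff $H\cong K$), and $\operatorname{Supp}(G)=\{[H]:H\in\mathcal{Z}(G)\}$. $G$ is semisimple if $G=\operatorname{soc}(G)$ (equivalently, $G$ is isomorphic to a restricted direct sum of simple $\Omega$-groups). The restricted direct sum $\bigoplus_{i\in I}G_i$ is the $\Omega$-subgroup of $\prod_i G_i$ (componentwise operators) of finitely supported families. A family $(H_i)_{i\in I}$ of $\Omega$-subgroups of $G$ satisfies (CC) if $H_j$ centralises $H_i$ for all distinct $i,j$; then $\theta^H_G\colon\bigoplus_i H_i\to G$ is the unique morphism restricting to the inclusion $H_i\hookrightarrow G$ on each summand. A morphism $f\colon G\to G'$ is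 normal if $f(N)$ is a normal $\Omega$-subgroup of $G'$ for every normal $\Omega$-subgroup $N$ of $G$; $\operatorname{Hom}_n(G,G')$ is the set of normal morphisms $G\to G'$. For a normal morphism $f\colon G\to G'$ and a simple $\Omega$-group $S$ one has $f(G_S)\subseteq G'_S$, and the $S$-component $f_S\colon G_S\to G'_S$ is the restriction of $f$ to $G_S$ with codomain $G'_S$. *)

From Stdlib Require Import List ProofIrrelevance FunctionalExtensionality ClassicalEpsilon.
Set Implicit Arguments.
Unset Strict Implicit.

Section OmegaGroups.
Variable Om : Type.

Record OGroup : Type := MkOGroup {
  ocar :> Type;
  omul : ocar -> ocar -> ocar;
  oone : ocar;
  oinv : ocar -> ocar;
  oact : Om -> ocar -> ocar;
  omulA : forall x y z, omul x (omul y z) = omul (omul x y) z;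
  omul1g : forall x, omul oone x = x;
  omulVg : forall x, omul (oinv x) x = oone;
  oactM : forall w x y, oact w (omul x y) = omul (oact w x) (oact w y)
}.
Arguments omul : clear implicits.
Arguments oone : clear implicits.
Arguments oinv : clear implicits.
Arguments oact : clear implicits.
Arguments omulA : clear implicits.
Arguments omul1g : clear implicits.
Arguments omulVg : clear implicits.
Arguments oactM : clear implicits.

Section GroupFacts.
Variable G : OGroup.
Lemma omulgV (x : G) : omul G x (oinv G x) = oone G.
Proof.
  rewrite <- (omul1g G (omul G x (oinv G x))).
  rewrite <- (omulVg G (oinv G x)) at 1.
  rewrite <- omulA, (omulA G (oinv G x)), omulVg, omul1g.
  apply omulVg.
Qed.
Lemma omulg1 (x : G) : omul G x (oone G) = x.
Proof. rewrite <- (omulVg G x), omulA, omulgV; apply omul1g. Qed.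
Lemma oidem (x : G) : omul G x x = x -> x = oone G.
Proof.
  intro h. rewrite <- (omul1g G x) at 1. rewrite <- (omulVg G x).
  rewrite <- omulA, h. reflexivity.
Qed.
Lemma oinv1 : oinv G (oone G) = oone G.
Proof. rewrite <- (omulg1 (oinv G (oone G))). apply omulVg. Qed.
Lemma oact1 w : oact G w (oone G) = oone G.
Proof. apply oidem. rewrite <- oactM, omul1g. reflexivity. Qed.
End GroupFacts.

Record OSub (G : OGroup) : Type := MkOSub {
  smem : G -> Prop;
  smem1 : smem (oone G);
  smemM : forall x y, smem x -> smem y -> smem (omul G x y);
  smemV : forall x, smem x -> smem (oinv G x);
  smemA : forall w x, smem x -> smem (oact G w x)
}.
Arguments smem {G} o _.
Arguments smem1 {G} o.
Arguments smemM {G} o {x y} _ _.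
Arguments smemV {G} o {x} _.
Arguments smemA {G} o w {x} _.

Lemma sig_ext (A : Type) (P : A -> Prop) (a b : sig P) :
  proj1_sig a = proj1_sig b -> a = b.
Proof.
  destruct a as [a pa], b as [b pb]; simpl; intros ->.
  f_equal; apply proof_irrelevance.
Qed.

Definition subG (G : OGroup) (H : OSub G) : OGroup.
Proof.
  refine (@MkOGroup {x : G | smem H x}
    (fun a b => exist _ (omul G (proj1_sig a) (proj1_sig b))
                   (smemM H (proj2_sig a) (proj2_sig b)))
    (exist _ (oone G) (smem1 H))
    (fun a => exist _ (oinv G (proj1_sig a)) (smemV H (proj2_sig a)))
    (fun w a => exist _ (oact G w (proj1_sig a)) (smemA H w (proj2_sig a)))
    _ _ _ _).
  - intros; apply sig_ext; simpl; apply omulA.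
  - intros; apply sig_ext; simpl; apply omul1g.
  - intros; apply sig_ext; simpl; apply omulVg.
  - intros; apply sig_ext; simpl; apply oactM.
Defined.

Definition sv (G : OGroup) (H : OSub G) (x : subG H) : G := proj1_sig x.

Definition conjg (G : OGroup) (y x : G) : G := omul G (omul G (oinv G y) x) y.

Definition normalP (G : OGroup) (P : G -> Prop) : Prop :=
  forall x y : G, P x -> P (conjg y x).
Definition normal (G : OGroup) (N : OSub G) : Prop := normalP (smem N).

Definition simple (G : OGroup) : Prop :=
  (exists x : G, x <> oone G) /\
  forall N : OSub G, normal N ->
    (forall x, smem N x -> x = oone G) \/ (forall x, smem N x).

Definition morphism (G K : OGroup) (f : G -> K) : Prop :=
  (forall x y, f (omul G x y) = omul K (f x) (f y)) /\
  (forall w x, f (oact G w x) = oact K w (f x)).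

Definition bij (A B : Type) (f : A -> B) : Prop :=
  (forall x y, f x = f y -> x = y) /\ (forall y, exists x, f x = y).

Definition iso (G K : OGroup) : Prop := exists f : G -> K, morphism f /\ bij f.

Definition normal_mor (G K : OGroup) (f : G -> K) : Prop :=
  morphism f /\
  forall N : OSub G, normal N -> normalP (fun y : K => exists x, smem N x /\ f x = y).

Definition gen (G : OGroup) (A : G -> Prop) : OSub G.
Proof.
  refine (@MkOSub G (fun x => forall K : OSub G, (forall a, A a -> smem K a) -> smem K x)
            _ _ _ _).
  - intros K _; apply smem1.
  - intros x y hx hy K hK; apply smemM; auto.
  - intros x hx K hK; apply smemV; auto.
  - intros w x hx K hK; apply smemA; auto.
Defined.

Definition inZ (G : OGroup) (N : OSub G) : Prop := normal N /\ simple (subG N).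

Definition soc (G : OGroup) : OSub G :=
  gen (fun x : G => exists N : OSub G, inZ N /\ smem N x).

Definition semisimple (G : OGroup) : Prop := forall x : G, smem (soc G) x.

Definition GS (G : OGroup) (S : OGroup) : OSub G :=
  gen (fun x : G => exists N : OSub G, inZ N /\ iso (subG N) S /\ smem N x).

(** canonical representative [H] of the isomorphism class of H *)
Definition rep (H : OGroup) : OGroup :=
  epsilon (inhabits H) (fun K => iso H K).

Definition Supp (G : OGroup) : OGroup -> Prop :=
  fun X => exists N : OSub G, inZ N /\ rep (subG N) = X.

Definition up (G : OGroup) (H : OSub G) (K : OSub (subG H)) : OSub G.
Proof.
  refine (@MkOSub G (fun x => exists y : subG H, smem K y /\ sv y = x) _ _ _ _).
  - exists (oone (subG H)); split; [apply smem1 | reflexivity].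
  - intros x y [a [ha <-]] [b [hb <-]].
    exists (omul (subG H) a b); split; [apply smemM; assumption | reflexivity].
  - intros x [a [ha <-]].
    exists (oinv (subG H) a); split; [apply smemV; assumption | reflexivity].
  - intros w x [a [ha <-]].
    exists (oact (subG H) w a); split; [apply smemA; assumption | reflexivity].
Defined.

(** an Omega-subgroup B of G, seen inside the Omega-group A <= G (i.e. B :&: A) *)
Definition restr (G : OGroup) (A B : OSub G) : OSub (subG A).
Proof.
  refine (@MkOSub (subG A) (fun y => smem B (sv y)) _ _ _ _).
  - apply smem1.
  - intros x y hx hy; apply (smemM B hx hy).
  - intros x hx; apply (smemV B hx).
  - intros w x hx; apply (smemA B w hx).
Defined.

Definition CC (X : OGroup) (I : Type) (K : I -> OSub X) : Prop :=
  forall i j, i <> j -> forall x y : X, smem (K i) x -> smem (K j) y ->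
    omul X y x = omul X x y.

Definition finsupp (I : Type) (F : I -> OGroup) (f : forall i, F i) : Prop :=
  exists l : list I, forall i, ~ In i l -> f i = oone (F i).

Section DSum.
Variables (I : Type) (F : I -> OGroup).

Lemma finsupp_mul (a b : forall i, F i) :
  finsupp a -> finsupp b -> finsupp (fun i => omul (F i) (a i) (b i)).
Proof.
  intros [la ha] [lb hb]; exists (la ++ lb); intros i hi.
  rewrite ha, hb; [apply omul1g | | ];
    intro; apply hi; apply in_or_app; auto.
Qed.
Lemma finsupp_one : finsupp (fun i => oone (F i)).
Proof. exists nil; intros; reflexivity. Qed.
Lemma finsupp_inv (a : forall i, F i) :
  finsupp a -> finsupp (fun i => oinv (F i) (a i)).
Proof. intros [la ha]; exists la; intros i hi; rewrite ha by assumption; apply oinv1. Qed.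
Lemma finsupp_act w (a : forall i, F i) :
  finsupp a -> finsupp (fun i => oact (F i) w (a i)).
Proof. intros [la ha]; exists la; intros i hi; rewrite ha by assumption; apply oact1. Qed.

Definition dcar := {f : forall i, F i | finsupp f}.
Definition dmul (a b : dcar) : dcar :=
  exist _ _ (finsupp_mul (proj2_sig a) (proj2_sig b)).
Definition done : dcar := exist _ _ finsupp_one.
Definition dinv (a : dcar) : dcar := exist _ _ (finsupp_inv (proj2_sig a)).
Definition dact w (a : dcar) : dcar := exist _ _ (finsupp_act w (proj2_sig a)).

Definition dsum : OGroup.
Proof.
  refine (@MkOGroup dcar dmul done dinv dact _ _ _ _);
  intros; apply sig_ext; simpl; apply functional_extensionality_dep; intro.
  - apply omulA.
  - apply omul1g.
  - apply omulVg.
  - apply oactM.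
Defined.
End DSum.

Definition dcomp (I : Type) (F : I -> OGroup) (x : dsum F) (i : I) : F i :=
  proj1_sig x i.

(** th is the canonical morphism theta^K : (+)_i K_i -> X, i.e. a morphism
    whose composition with each canonical injection (elements supported
    in {i}) is the inclusion K_i -> X *)
Definition canonical_mor (X : OGroup) (I : Type) (K : I -> OSub X)
    (th : dsum (fun i => subG (K i)) -> X) : Prop :=
  morphism th /\
  forall (x : dsum (fun i => subG (K i))) (i : I),
    (forall j, j <> i -> dcomp x j = oone (subG (K j))) ->
    th x = sv (dcomp x i).

End OmegaGroups.

Arguments canonical_mor {Om X I} K th.

(* Everything rests on a fact about finite products of simple normal
   subgroups N_1, ..., N_k of G: a simple subgroup contained in and normalised
   by their product lies in the product of those N_j isomorphic to it, and a
   normal subgroup meeting the product nontrivially contains a simple normal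
   subgroup of G.  Both follow by induction on k, splitting the product as
   (N_2 ... N_k) x N_1 when N_1 meets the other factors trivially and
   projecting onto the two factors.
   Consequently soc G = G_S x C_S, where C_S is generated by the simple normal
   subgroups not isomorphic to S; since an element of soc G is determined by
   its isotypic components, a normal morphism between semisimple groups is
   determined by its S-components, and any family of normal S-components can
   be glued into one.  For G = (+)_i H_i the coordinate projections map each
   simple normal subgroup of G to 1 or isomorphically onto one of some H_i,
   which transfers soc, G_S and Supp between G and the H_i. *)

From Stdlib Require Import List ProofIrrelevance FunctionalExtensionality ClassicalEpsilon Classical PropExtensionality.
Set Implicit Arguments.
Unset Strict Implicit.

Notation "x ** y" := (omul x y) (at level 40, left associativity).

(** * Omega-groups, subgroups and isomorphisms *)

Section GroupAlgebra.
Context {Om : Type} {G : OGroup Om}.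
Implicit Types x y z : G.

Lemma mulgI x y z : x ** y = x ** z -> y = z.
Proof.
  intro h. rewrite <- (omul1g y), <- (omul1g z), <- (omulVg x), <- !omulA, h. reflexivity.
Qed.

Lemma mulIg x y z : y ** x = z ** x -> y = z.
Proof.
  intro h. rewrite <- (omulg1 y), <- (omulg1 z), <- (omulgV x), !omulA, h. reflexivity.
Qed.

Lemma invg_unique_r x y : x ** y = oone G -> y = oinv x.
Proof. intro h. apply (mulgI (x := x)). rewrite h, omulgV. reflexivity. Qed.

Lemma invg_unique_l x y : x ** y = oone G -> x = oinv y.
Proof. intro h. apply (mulIg (x := y)). rewrite h, omulVg. reflexivity. Qed.

Lemma invgK x : oinv (oinv x) = x.
Proof. symmetry. apply invg_unique_r. apply omulVg. Qed.

Lemma invMg x y : oinv (x ** y) = oinv y ** oinv x.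
Proof.
  symmetry. apply invg_unique_r.
  rewrite <- omulA, (omulA y), omulgV, omul1g, omulgV. reflexivity.
Qed.

Lemma commute_of_commutator x y : oinv x ** oinv y ** x ** y = oone G -> x ** y = y ** x.
Proof.
  intro h. transitivity ((y ** x) ** (oinv x ** oinv y ** x ** y)).
  - rewrite !omulA, <- (omulA y x (oinv x)), omulgV, omulg1, omulgV, omul1g. reflexivity.
  - rewrite h, omulg1. reflexivity.
Qed.

Lemma commute1 x : x ** oone G = oone G ** x.
Proof. rewrite omulg1, omul1g. reflexivity. Qed.

Lemma commuteM x y z : x ** y = y ** x -> x ** z = z ** x -> x ** (y ** z) = (y ** z) ** x.
Proof. intros h1 h2. rewrite omulA, h1, <- omulA, h2, omulA. reflexivity. Qed.

Lemma conjMg y a b : conjg y (a ** b) = conjg y a ** conjg y b.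
Proof.
  unfold conjg. rewrite <- !omulA. f_equal. f_equal.
  rewrite !omulA, omulgV, omul1g. reflexivity.
Qed.

Lemma conjgM y1 y2 x : conjg (y1 ** y2) x = conjg y2 (conjg y1 x).
Proof. unfold conjg. rewrite invMg, !omulA. reflexivity. Qed.

Lemma conjg1 x : conjg (oone G) x = x.
Proof. unfold conjg. rewrite oinv1, omul1g, omulg1. reflexivity. Qed.

Lemma conj1g y : conjg y (oone G) = oone G.
Proof. unfold conjg. rewrite omulg1, omulVg. reflexivity. Qed.

Lemma conjg_commute y x : x ** y = y ** x -> conjg y x = x.
Proof.
  unfold conjg. intro h. rewrite <- omulA, h, omulA, omulVg, omul1g. reflexivity.
Qed.

End GroupAlgebra.

Section Morphisms.
Context {Om : Type}.

Lemma morph1 {A B : OGroup Om} (f : A -> B) : morphism f -> f (oone A) = oone B.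
Proof. intros [hm _]. apply oidem. rewrite <- hm, omul1g. reflexivity. Qed.

Lemma morphV {A B : OGroup Om} (f : A -> B) : morphism f -> forall x, f (oinv x) = oinv (f x).
Proof. intros hf x. apply invg_unique_r. rewrite <- (proj1 hf), omulgV. apply morph1; auto. Qed.

Lemma morph_conjg {A B : OGroup Om} (f : A -> B) :
  morphism f -> forall y x, f (conjg y x) = conjg (f y) (f x).
Proof. intros hf y x. unfold conjg. rewrite !(proj1 hf), (morphV hf). reflexivity. Qed.

Lemma morph_comp {A B C : OGroup Om} (f : A -> B) (g : B -> C) :
  morphism f -> morphism g -> morphism (fun x => g (f x)).
Proof. intros [f1 f2] [g1 g2]. split; intros; rewrite ?f1, ?f2, ?g1, ?g2; reflexivity. Qed.

Lemma morph_sv {G : OGroup Om} (H : OSub G) : morphism (@sv _ _ H).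
Proof. split; reflexivity. Qed.

Lemma morph_inverse {A B : OGroup Om} (f : A -> B) (g : B -> A) :
  morphism f -> (forall x, g (f x) = x) -> (forall y, f (g y) = y) -> morphism g.
Proof.
  intros [h1 h2] gf fg. split.
  - intros x y. rewrite <- (fg x), <- (fg y) at 1. rewrite <- h1. apply gf.
  - intros w x. rewrite <- (fg x) at 1. rewrite <- h2. apply gf.
Qed.

Lemma morph_inj {A B : OGroup Om} (f : A -> B) : morphism f ->
  (forall x, f x = oone B -> x = oone A) -> forall x y, f x = f y -> x = y.
Proof.
  intros hf h x y e. apply (mulIg (x := oinv y)). rewrite omulgV. apply h.
  rewrite (proj1 hf), e, (morphV hf), omulgV. reflexivity.
Qed.

End Morphisms.

Section Subgroups.
Context {Om : Type}.

Definition inclS {G : OGroup Om} (A B : OSub G) : Prop := forall x, smem A x -> smem B x.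

Lemma inclS_trans {G : OGroup Om} (A B C : OSub G) : inclS A B -> inclS B C -> inclS A C.
Proof. intros h1 h2 x hx. auto. Qed.

Definition normalises {G : OGroup Om} (K M : OSub G) : Prop :=
  forall y x, smem K y -> smem M x -> smem M (conjg y x).

Lemma osub_ext {G : OGroup Om} (A B : OSub G) : (forall x, smem A x <-> smem B x) -> A = B.
Proof.
  destruct A as [a a1 aM aV aA], B as [b b1 bM bV bA]; simpl; intro h.
  assert (a = b) by (apply functional_extensionality; intro; apply propositional_extensionality; auto).
  subst. f_equal; apply proof_irrelevance.
Qed.

Lemma gen_min {G : OGroup Om} (A : G -> Prop) (K : OSub G) x :
  smem (gen A) x -> (forall a, A a -> smem K a) -> smem K x.
Proof. intros h hK. exact (h K hK). Qed.

Lemma gen_in {G : OGroup Om} (A : G -> Prop) a : A a -> smem (gen A) a.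
Proof. intros h K hK. auto. Qed.

Fixpoint prodl {G : OGroup Om} (l : list G) : G :=
  match l with nil => oone G | a :: l => a ** prodl l end.

Lemma prodl_app {G : OGroup Om} (l1 l2 : list G) : prodl (l1 ++ l2) = prodl l1 ** prodl l2.
Proof. induction l1; simpl; [rewrite omul1g | rewrite IHl1, omulA]; auto. Qed.

Section Generated.
Variables (G : OGroup Om) (A : G -> Prop).
Hypothesis A_inv : forall a, A a -> A (oinv a).
Hypothesis A_act : forall w a, A a -> A (oact w a).

Definition words : OSub G.
Proof.
  refine (@MkOSub _ G (fun x => exists l, Forall A l /\ x = prodl l) _ _ _ _).
  - exists nil; split; auto.
  - intros x y [l1 [h1 ->]] [l2 [h2 ->]]. exists (l1 ++ l2); split.
    + apply Forall_app; auto.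
    + rewrite prodl_app; auto.
  - intros x [l [h ->]]. exists (rev (map (@oinv _ G) l)). split.
    + apply Forall_rev, Forall_map. eapply Forall_impl; [|exact h]. auto.
    + induction l; simpl.
      * apply oinv1.
      * inversion h; subst. rewrite prodl_app, <- IHl by auto. simpl.
        rewrite omulg1, invMg. auto.
  - intros w x [l [h ->]]. exists (map (oact w) l). split.
    + apply Forall_map. eapply Forall_impl; [|exact h]. auto.
    + induction l; simpl.
      * apply oact1.
      * inversion h; subst. rewrite oactM, IHl; auto.
Defined.

Lemma gen_ind (P : G -> Prop) :
  P (oone G) -> (forall a x, A a -> P x -> P (a ** x)) -> forall x, smem (gen A) x -> P x.
Proof.
  intros h1 hs x hx.
  assert (hw : smem words x).
  { apply hx. intros a ha. exists (a :: nil). simpl. rewrite omulg1. auto. }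
  destruct hw as [l [hl ->]]. clear hx.
  induction l; simpl; [exact h1|]. inversion hl; subst. apply hs; auto.
Qed.

Lemma gen_normal : (forall y a, A a -> A (conjg y a)) -> normal (gen A).
Proof.
  intros hc x y hx. revert x hx. apply (gen_ind (P := fun x => smem (gen A) (conjg y x))).
  - rewrite conj1g. apply smem1.
  - intros a x h1 h2. rewrite conjMg. apply smemM; auto. apply gen_in; auto.
Qed.

End Generated.

Definition trivS (G : OGroup Om) : OSub G.
Proof.
  refine (@MkOSub _ G (fun x => x = oone G) _ _ _ _); intros; subst.
  - reflexivity.
  - apply omul1g.
  - apply oinv1.
  - apply oact1.
Defined.

Definition fullS (G : OGroup Om) : OSub G.
Proof. refine (@MkOSub _ G (fun _ => True) _ _ _ _); auto. Defined.

Definition capS {G : OGroup Om} (A B : OSub G) : OSub G.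
Proof.
  refine (@MkOSub _ G (fun x => smem A x /\ smem B x) _ _ _ _).
  - split; apply smem1.
  - intros x y [] []; split; apply smemM; auto.
  - intros x []; split; apply smemV; auto.
  - intros w x []; split; apply smemA; auto.
Defined.

Lemma normal_capS {G : OGroup Om} (A B : OSub G) : normal A -> normal B -> normal (capS A B).
Proof. intros hA hB x y [h1 h2]. split; auto. Qed.

Definition capSs {G : OGroup Om} {I : Type} (K : I -> OSub G) : OSub G.
Proof.
  refine (@MkOSub _ G (fun x => forall i, smem (K i) x) _ _ _ _).
  - intro; apply smem1.
  - intros x y hx hy i; apply smemM; auto.
  - intros x hx i; apply smemV; auto.
  - intros w x hx i; apply smemA; auto.
Defined.

Lemma normal_capSs {G : OGroup Om} {I : Type} (K : I -> OSub G) :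
  (forall i, normal (K i)) -> normal (capSs K).
Proof. intros hK x y hx i. apply hK; auto. Qed.

Definition imgS {A B : OGroup Om} (f : A -> B) (hf : morphism f) (M : OSub A) : OSub B.
Proof.
  refine (@MkOSub _ B (fun b => exists a, smem M a /\ f a = b) _ _ _ _).
  - exists (oone A); split; [apply smem1 | apply morph1; auto].
  - intros x y [a [ha <-]] [b [hb <-]]. exists (a ** b); split; [apply smemM; auto | apply hf].
  - intros x [a [ha <-]]. exists (oinv a); split; [apply smemV; auto | apply morphV; auto].
  - intros w x [a [ha <-]]. exists (oact w a); split; [apply smemA; auto | apply hf].
Defined.

Definition rangeS {A B : OGroup Om} (f : A -> B) (hf : morphism f) : OSub B.
Proof.
  refine (@MkOSub _ B (fun b => exists a, f a = b) _ _ _ _).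
  - exists (oone A). apply morph1; auto.
  - intros x y [a <-] [b <-]. exists (a ** b). apply hf.
  - intros x [a <-]. exists (oinv a). apply morphV; auto.
  - intros w x [a <-]. exists (oact w a). apply hf.
Defined.

Definition kerS {A B : OGroup Om} (f : A -> B) (hf : morphism f) : OSub A.
Proof.
  refine (@MkOSub _ A (fun a => f a = oone B) _ _ _ _).
  - apply morph1; auto.
  - intros x y h1 h2. rewrite (proj1 hf), h1, h2. apply omul1g.
  - intros x h. rewrite (morphV hf), h. apply oinv1.
  - intros w x h. rewrite (proj2 hf), h. apply oact1.
Defined.

Lemma normal_kerS {A B : OGroup Om} (f : A -> B) (hf : morphism f) : normal (kerS hf).
Proof.
  intros x y hx. change (f (conjg y x) = oone B). rewrite (morph_conjg hf).
  change (f x = oone B) in hx. rewrite hx. apply conj1g.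
Qed.

Lemma normal_up_central {G : OGroup Om} (H : OSub G) :
  (forall g, exists h c, smem H h /\ (forall h', smem H h' -> c ** h' = h' ** c) /\ g = h ** c) ->
  forall P : OSub (subG H), normal P -> normal (up P).
Proof.
  intros hdec P nP x y [p [hp <-]]. destruct (hdec y) as [h [c [hh [hc ->]]]].
  rewrite conjgM. exists (conjg (exist _ h hh : subG H) p). split; [apply nP; auto |].
  change (conjg h (sv p) = conjg c (conjg h (sv p))). symmetry. apply conjg_commute.
  symmetry. apply hc. apply (smemM (smemM (smemV hh) (proj2_sig p)) hh).
Qed.

End Subgroups.

Section Isomorphisms.
Context {Om : Type}.

Lemma bij_inv {A B : Type} (f : A -> B) : bij f ->
  exists g : B -> A, (forall x, g (f x) = x) /\ (forall y, f (g y) = y).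
Proof.
  intros [hi hs]. exists (fun y => proj1_sig (constructive_indefinite_description _ (hs y))).
  split.
  - intro x. apply hi. destruct (constructive_indefinite_description _ (hs (f x))); auto.
  - intro y. destruct (constructive_indefinite_description _ (hs y)); auto.
Qed.

Lemma iso_refl (A : OGroup Om) : iso A A.
Proof. exists (fun x => x). split; [split | split]; eauto. Qed.

Lemma iso_sym (A B : OGroup Om) : iso A B -> iso B A.
Proof.
  intros [f [hf hb]]. destruct (bij_inv hb) as [g [gf fg]]. exists g. split.
  - eapply morph_inverse; eauto.
  - split.
    + intros x y h. rewrite <- (fg x), <- (fg y), h; auto.
    + intro y. exists (f y); auto.
Qed.

Lemma iso_trans (A B C : OGroup Om) : iso A B -> iso B C -> iso A C.
Proof.
  intros [f [hf [fi fs]]] [g [hg [gi gs]]]. exists (fun x => g (f x)). split.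
  - apply morph_comp; auto.
  - split; [auto|]. intro z. destruct (gs z) as [y <-]. destruct (fs y) as [x <-]. eauto.
Qed.

Lemma simple_iso (A B : OGroup Om) : simple A -> iso A B -> simple B.
Proof.
  intros [[x0 hx0] hs] hi. apply iso_sym in hi. destruct hi as [g [hg [gi gs]]].
  destruct (bij_inv (conj gi gs)) as [f [fg gf]].
  split.
  - exists (f x0). intro e. apply hx0. rewrite <- (gf x0), e. apply morph1; auto.
  - intros N hN.
    assert (nN' : normal (imgS hg N)).
    { intros a y [b [hb <-]]. exists (conjg (f y) b). split; [apply hN; auto|].
      rewrite (morph_conjg hg), gf. reflexivity. }
    destruct (hs _ nN') as [h | h]; [left | right].
    + intros x hx. apply gi. rewrite (morph1 hg). apply h. exists x; auto.
    + intro x. destruct (h (g x)) as [b [hb e]]. apply gi in e. subst; auto.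
Qed.

Lemma iso_up {G : OGroup Om} (H : OSub G) (N : OSub (subG H)) : iso (subG (up N)) (subG N).
Proof.
  apply iso_sym.
  unshelve eexists (fun y : subG N => exist _ (sv (sv y)) _).
  { exists (sv y). split; [exact (proj2_sig y) | reflexivity]. }
  split; [split; intros; apply sig_ext; reflexivity | split].
  - intros x y e. apply (f_equal (@sv _ _ _)) in e. simpl in e.
    apply sig_ext, sig_ext. exact e.
  - intros [x [y [hy e]]]. exists (exist _ y hy). apply sig_ext. simpl. auto.
Qed.

Lemma iso_restr {G : OGroup Om} (A N : OSub G) : inclS N A -> iso (subG (restr A N)) (subG N).
Proof.
  intro hNA. apply iso_sym.
  unshelve eexists (fun y : subG N => exist _ (exist _ (sv y) _) _).
  { apply hNA. exact (proj2_sig y). }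
  { exact (proj2_sig y). }
  split; [split; intros; apply sig_ext, sig_ext; reflexivity | split].
  - intros x y e. apply (f_equal (fun z => sv (sv z))) in e. simpl in e. apply sig_ext; exact e.
  - intros [[x hx] hx']. exists (exist _ x hx'). apply sig_ext, sig_ext. reflexivity.
Qed.

Lemma iso_imgS {A B : OGroup Om} (f : A -> B) (hf : morphism f) (M : OSub A) :
  (forall x y, smem M x -> smem M y -> f x = f y -> x = y) -> iso (subG M) (subG (imgS hf M)).
Proof.
  intro hinj.
  unshelve eexists (fun y : subG M => exist _ (f (sv y)) _).
  { exists (sv y). split; [exact (proj2_sig y) | reflexivity]. }
  split; [split; intros; apply sig_ext; simpl; apply hf | split].
  - intros x y e. apply (f_equal (@sv _ _ _)) in e. simpl in e.
    apply sig_ext. apply hinj; auto; [exact (proj2_sig x) | exact (proj2_sig y)].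
  - intros [b [a [ha e]]]. exists (exist _ a ha). apply sig_ext. simpl. auto.
Qed.

Lemma iso_rangeS {A B : OGroup Om} (f : A -> B) (hf : morphism f) :
  (forall x y, f x = f y -> x = y) -> iso A (subG (rangeS hf)).
Proof.
  intro hinj.
  unshelve eexists (fun y : A => exist _ (f y) _). { exists y; auto. }
  split; [split; intros; apply sig_ext; simpl; apply hf | split].
  - intros x y e. apply (f_equal (@sv _ _ _)) in e. simpl in e. auto.
  - intros [b [a e]]. exists a. apply sig_ext. simpl. auto.
Qed.

End Isomorphisms.

Section SimpleGroups.
Context {Om : Type}.

Lemma simple_morph {X B : OGroup Om} (f : X -> B) (hf : morphism f) :
  simple X -> (forall x, f x = oone B) \/ (forall x y, f x = f y -> x = y).
Proof.
  intros [_ hs]. destruct (hs (kerS hf)) as [h | h]; [apply normal_kerS | |].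
  - right. apply morph_inj; auto.
  - left. exact h.
Qed.

Lemma simple_morph_on {G B : OGroup Om} (M : OSub G) (f : G -> B) (hf : morphism f) :
  simple (subG M) ->
  (forall x, smem M x -> f x = oone B) \/
  (forall x y, smem M x -> smem M y -> f x = f y -> x = y).
Proof.
  intro sM. destruct (simple_morph (morph_comp (morph_sv M) hf) sM) as [h | h]; [left | right].
  - intros x hx. exact (h (exist _ x hx)).
  - intros x y hx hy e. exact (f_equal (@sv _ _ _) (h (exist _ x hx) (exist _ y hy) e)).
Qed.

Lemma simple_nontriv {G : OGroup Om} (M : OSub G) :
  simple (subG M) -> exists x, smem M x /\ x <> oone G.
Proof.
  intros [[x hx] _]. exists (sv x). split; [exact (proj2_sig x)|].
  intro e. apply hx. apply sig_ext. exact e.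
Qed.

Lemma simple_meet {G : OGroup Om} (M P : OSub G) : simple (subG M) ->
  normalises M P -> (forall x, smem M x -> smem P x -> x = oone G) \/ inclS M P.
Proof.
  intros [_ hs] hP.
  assert (nK : normal (restr M P)). { intros x y hx. apply hP; auto. exact (proj2_sig y). }
  destruct (hs _ nK) as [h | h]; [left | right].
  - intros x hx hx'. exact (f_equal (@sv _ _ _) (h (exist _ x hx) hx')).
  - intros x hx. exact (h (exist _ x hx)).
Qed.

End SimpleGroups.

(** * Products of simple normal subgroups *)

Section ZGenerated.
Context {Om : Type}.
Variable G : OGroup Om.

Definition Zgen (P : OSub G -> Prop) (x : G) : Prop := exists N, inZ N /\ P N /\ smem N x.

Definition genP (P : OSub G -> Prop) : OSub G := gen (Zgen P).

Lemma Zgen_inv P a : Zgen P a -> Zgen P (oinv a).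
Proof. intros [N [h1 [h2 h3]]]. exists N; split; [|split]; auto. apply smemV; auto. Qed.

Lemma Zgen_act P w a : Zgen P a -> Zgen P (oact w a).
Proof. intros [N [h1 [h2 h3]]]. exists N; split; [|split]; auto. apply smemA; auto. Qed.

Lemma genP_ind (P : OSub G -> Prop) (Q : G -> Prop) :
  Q (oone G) -> (forall a x, Zgen P a -> Q x -> Q (a ** x)) ->
  forall x, smem (genP P) x -> Q x.
Proof. apply gen_ind; [apply Zgen_inv | apply Zgen_act]. Qed.

Lemma genP_normal P : normal (genP P).
Proof.
  apply gen_normal; [apply Zgen_inv | apply Zgen_act |].
  intros y a [N [h1 [h2 h3]]]. exists N; split; [|split]; auto. apply (proj1 h1); auto.
Qed.

Lemma genP_in P N x : inZ N -> P N -> smem N x -> smem (genP P) x.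
Proof. intros. apply gen_in. exists N; auto. Qed.

Lemma genP_mono (P Q : OSub G -> Prop) :
  (forall N, inZ N -> P N -> Q N) -> inclS (genP P) (genP Q).
Proof.
  intros h x hx. apply (gen_min hx). intros a [N [h1 [h2 h3]]]. apply gen_in. exists N; auto.
Qed.

Lemma genP_nil P x : (forall N, inZ N -> ~ P N) -> smem (genP P) x -> x = oone G.
Proof.
  intros h hx. apply (gen_min (K := trivS G) hx).
  intros a [N [h1 [h2 h3]]]. exfalso; eapply h; eauto.
Qed.

Lemma genP_nontriv P x : smem (genP P) x -> x <> oone G -> exists N, inZ N /\ P N.
Proof.
  intros hx ne. apply NNPP. intro hno. apply ne. apply (genP_nil (P := P)); auto.
  intros N hN hP. apply hno. exists N; auto.
Qed.

Lemma soc_eq : soc G = genP (fun _ => True).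
Proof.
  apply osub_ext. intro x. split; intro h; apply (gen_min h).
  - intros a [N [h1 h2]]. apply gen_in. exists N; auto.
  - intros a [N [h1 [_ h2]]]. apply gen_in. exists N; auto.
Qed.

Lemma GS_eq S : GS G S = genP (fun N => iso (subG N) S).
Proof.
  apply osub_ext. intro x. split; intro h; apply (gen_min h);
    intros a [N [h1 h2]]; apply gen_in; exists N; auto.
Qed.

Lemma inZ_soc N : inZ N -> inclS N (soc G).
Proof. intros hN x hx. apply gen_in. exists N; auto. Qed.

Lemma commute_trivial_meet (A B : OSub G) : normalises B A -> normalises A B ->
  (forall x, smem A x -> smem B x -> x = oone G) ->
  forall a b, smem A a -> smem B b -> a ** b = b ** a.
Proof.
  intros nA nB h a b ha hb. apply commute_of_commutator. apply h.
  - replace (oinv a ** oinv b ** a ** b) with (oinv a ** conjg b a)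
      by (unfold conjg; rewrite !omulA; auto).
    apply smemM; [apply smemV; auto | apply nA; auto].
  - apply smemM; auto. change (smem B (conjg a (oinv b))). apply nB; auto. apply smemV; auto.
Qed.

Lemma commute_normal (A B : OSub G) : normal A -> normal B ->
  (forall x, smem A x -> smem B x -> x = oone G) ->
  forall a b, smem A a -> smem B b -> a ** b = b ** a.
Proof.
  intros nA nB. apply commute_trivial_meet; intros y x _ hx; [apply nA | apply nB]; auto.
Qed.

Lemma Z_meet (M N : OSub G) : inZ M -> inZ N ->
  M = N \/ (forall x y, smem M x -> smem N y -> x ** y = y ** x).
Proof.
  intros [nM sM] [nN sN].
  destruct (simple_meet sM (P := N)) as [h | h]; [intros y x hy hx; apply nN; auto | |].
  - right. apply commute_normal; auto.
  - destruct (simple_meet sN (P := M)) as [h' | h']; [intros y x hy hx; apply nM; auto | |].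
    + exfalso. destruct (simple_nontriv sM) as [x [hx hx1]]. apply hx1. apply h'; auto.
    + left. apply osub_ext. intro x; split; auto.
Qed.

Lemma gen_commute (A B : G -> Prop)
  (A_inv : forall a, A a -> A (oinv a)) (A_act : forall w a, A a -> A (oact w a))
  (B_inv : forall a, B a -> B (oinv a)) (B_act : forall w a, B a -> B (oact w a)) :
  (forall a b, A a -> B b -> a ** b = b ** a) ->
  forall x y, smem (gen A) x -> smem (gen B) y -> x ** y = y ** x.
Proof.
  intros h x y hx hy. revert y hy.
  apply (gen_ind A_inv A_act (P := fun x => forall y, smem (gen B) y -> x ** y = y ** x));
    auto.
  - intros y _. symmetry. apply commute1.
  - intros a x' ha hx' y hy. symmetry. apply commuteM.
    + symmetry. revert y hy. apply (gen_ind B_inv B_act (P := fun y => a ** y = y ** a)).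
      * apply commute1.
      * intros b y hb hy. apply commuteM; auto.
    + symmetry. apply hx'. auto.
Qed.

Lemma genP_commute (P Q : OSub G -> Prop) : (forall N, P N -> Q N -> False) ->
  forall x y, smem (genP P) x -> smem (genP Q) y -> x ** y = y ** x.
Proof.
  intros hPQ. apply gen_commute; try apply Zgen_inv; try apply Zgen_act.
  intros a b [N [hN [hP ha]]] [N' [hN' [hQ hb]]].
  destruct (Z_meet hN hN') as [e | h]; auto. subst. exfalso; eauto.
Qed.

End ZGenerated.
Arguments genP {Om} G P.

Section InternalProduct.
Context {Om : Type} {G : OGroup Om}.
Variables A B : OSub G.
Hypothesis nA : normal A.
Hypothesis nB : normal B.
Hypothesis hAB : forall x, smem A x -> smem B x -> x = oone G.

Lemma product_commute a b : smem A a -> smem B b -> a ** b = b ** a.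
Proof. apply commute_normal; auto. Qed.

Lemma product_unique a1 b1 a2 b2 : smem A a1 -> smem B b1 -> smem A a2 -> smem B b2 ->
  a1 ** b1 = a2 ** b2 -> a1 = a2 /\ b1 = b2.
Proof.
  intros h1 h2 h3 h4 e.
  assert (e' : oinv a2 ** a1 = b2 ** oinv b1).
  { apply (mulgI (x := a2)). apply (mulIg (x := b1)).
    rewrite !omulA, omulgV, omul1g, <- omulA, omulVg, omulg1. auto. }
  assert (h : oinv a2 ** a1 = oone G).
  { apply hAB; [apply smemM; auto; apply smemV; auto |].
    rewrite e'. apply smemM; auto. apply smemV; auto. }
  assert (a1 = a2) by (apply invg_unique_r in h; rewrite invgK in h; auto).
  subst. split; auto. apply mulgI in e. auto.
Qed.

Variable M : OSub G.
Hypothesis hM : forall m, smem M m -> exists a b, smem A a /\ smem B b /\ m = a ** b.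

Lemma product_dec (m : subG M) :
  exists p : G * G, smem A (fst p) /\ smem B (snd p) /\ sv m = fst p ** snd p.
Proof. destruct (hM (proj2_sig m)) as [a [b h]]. exists (a, b). exact h. Qed.

Definition projA (m : subG M) : G :=
  fst (proj1_sig (constructive_indefinite_description _ (product_dec m))).
Definition projB (m : subG M) : G :=
  snd (proj1_sig (constructive_indefinite_description _ (product_dec m))).

Lemma proj_spec m : smem A (projA m) /\ smem B (projB m) /\ sv m = projA m ** projB m.
Proof.
  unfold projA, projB. destruct (constructive_indefinite_description _ (product_dec m)); auto.
Qed.

Lemma proj_unique m a b : smem A a -> smem B b -> sv m = a ** b ->
  projA m = a /\ projB m = b.
Proof.
  intros ha hb e. destruct (proj_spec m) as [h1 [h2 h3]].
  apply product_unique; auto. rewrite <- h3. auto.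
Qed.

Lemma proj_morph : morphism projA /\ morphism projB.
Proof.
  assert (hmul : forall x y, projA (x ** y) = projA x ** projA y /\
                             projB (x ** y) = projB x ** projB y).
  { intros x y. destruct (proj_spec x) as [ax [bx ex]]. destruct (proj_spec y) as [ay [by_ ey]].
    apply proj_unique; try (apply smemM; auto).
    change (sv x ** sv y = projA x ** projA y ** (projB x ** projB y)).
    rewrite ex, ey, !omulA. f_equal. rewrite <- !omulA. f_equal.
    symmetry; apply product_commute; auto. }
  assert (hact : forall w x, projA (oact w x) = oact w (projA x) /\
                             projB (oact w x) = oact w (projB x)).
  { intros w x. destruct (proj_spec x) as [ax [bx ex]].
    apply proj_unique; try (apply smemA; auto).
    change (oact w (sv x) = oact w (projA x) ** oact w (projB x)). rewrite <- oactM, ex. auto. }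
  split; split; intros; apply hmul || apply hact.
Qed.

Lemma projA_conj : normalises A M ->
  forall y m, smem A y -> exists m', projA m' = conjg y (projA m).
Proof.
  intros hn y m hy. exists (exist _ (conjg y (sv m)) (hn _ _ hy (proj2_sig m))).
  destruct (proj_spec m) as [ha [hb e]].
  eapply proj1, (proj_unique (b := projB m)); [apply nA; auto | auto |].
  change (conjg y (sv m) = conjg y (projA m) ** projB m). rewrite e, conjMg. f_equal. apply conjg_commute.
  symmetry. apply product_commute; auto.
Qed.

Lemma projB_conj : normalises B M ->
  forall y m, smem B y -> exists m', projB m' = conjg y (projB m).
Proof.
  intros hn y m hy. exists (exist _ (conjg y (sv m)) (hn _ _ hy (proj2_sig m))).
  destruct (proj_spec m) as [ha [hb e]].
  eapply proj2, (proj_unique (a := projA m)); [auto | apply nB; auto |].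
  change (conjg y (sv m) = projA m ** conjg y (projB m)). rewrite e, conjMg. f_equal. apply conjg_commute. apply product_commute; auto.
Qed.

(* The projection to B is injective on M, and its image is normalised by B,
   hence is all of B. *)
Lemma projB_iso : normalises B M ->
  (forall x, smem M x -> smem A x -> x = oone G) ->
  simple (subG B) -> (exists x, smem M x /\ x <> oone G) -> iso (subG M) (subG B).
Proof.
  intros hn hMA sB [x0 [hx0 ne]].
  pose proof (proj2 proj_morph) as hpb.
  assert (hinj : forall m1 m2, projB m1 = projB m2 -> m1 = m2).
  { apply morph_inj; auto. intros m e. destruct (proj_spec m) as [ha [_ em]].
    rewrite e, omulg1 in em. apply sig_ext. change (sv m = oone G).
    apply hMA; [exact (proj2_sig m) | rewrite em; auto]. }
  assert (e : rangeS hpb = B).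
  { apply osub_ext. intro x. split; [intros [m <-]; apply proj_spec |].
    destruct (simple_meet sB (P := rangeS hpb)) as [h | h]; auto.
    - intros y' x' hy' [m <-]. apply (projB_conj hn m hy').
    - exfalso. apply ne.
      assert (e0 : projB (exist _ x0 hx0) = projB (oone _)).
      { rewrite (morph1 hpb). apply h; [apply proj_spec | eexists; eauto]. }
      exact (f_equal (@sv _ _ _) (hinj _ _ e0)). }
  rewrite <- e. apply iso_rangeS. exact hinj.
Qed.

End InternalProduct.

Section FinitelyGenerated.
Context {Om : Type}.
Variable G : OGroup Om.

Definition genL (l : list (OSub G)) : OSub G := genP G (fun N => In N l).

Lemma genL_normal l : normal (genL l).
Proof. apply genP_normal. Qed.

Lemma genL_sub l N : inclS (genL l) (genL (N :: l)).
Proof. apply genP_mono. simpl; auto. Qed.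

Lemma genL_nil x : smem (genL nil) x -> x = oone G.
Proof. apply genP_nil. simpl; auto. Qed.

Lemma genL_cons l N : inZ N -> forall x, smem (genL (N :: l)) x <->
  exists a b, smem (genL l) a /\ smem N b /\ x = a ** b.
Proof.
  intros hN x. split.
  - apply (genP_ind (Q := fun x => exists a b, smem (genL l) a /\ smem N b /\ x = a ** b)).
    + exists (oone G), (oone G). split; [|split]; [apply smem1 | apply smem1 | rewrite omul1g; auto].
    + intros g y [N' [hN' [hin hg]]] [a [b [ha [hb ->]]]].
      destruct hin as [<- | hin].
      * (* g a b = a^(g^-1) (g b) *)
        exists (conjg (oinv g) a), (g ** b). split; [|split].
        -- apply genL_normal; auto.
        -- apply smemM; auto.
        -- unfold conjg. rewrite invgK, !omulA, <- (omulA (g ** a)), omulVg, omulg1. auto.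
      * exists (g ** a), b. split; [|split]; auto.
        -- apply smemM; auto. apply genP_in with N'; auto.
        -- rewrite omulA; auto.
  - intros [a [b [ha [hb ->]]]]. apply smemM; [apply genL_sub; auto |].
    apply genP_in with N; simpl; auto.
Qed.

Lemma genL_meet_trivial l N : inZ N ->
  (exists x, smem (genL (N :: l)) x /\ ~ smem (genL l) x) ->
  forall x, smem (genL l) x -> smem N x -> x = oone G.
Proof.
  intros hN [x0 [hx0 hx0l]].
  destruct (simple_meet (proj2 hN) (P := genL l)) as [h | h].
  - intros y x _ hx. apply genL_normal; auto.
  - intros x hx hxN. apply h; auto.
  - exfalso. apply hx0l. apply (genL_cons l hN) in hx0. destruct hx0 as [a [b [ha [hb ->]]]].
    apply smemM; auto.
Qed.

Lemma genL_cons_iso l N M : inZ N -> normalises N M -> inclS M (genL (N :: l)) ->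
  (forall x, smem M x -> smem (genL l) x -> x = oone G) ->
  (exists x, smem M x /\ x <> oone G) -> iso (subG M) (subG N).
Proof.
  intros hN hn hsub hML hnt.
  assert (hLN : forall x, smem (genL l) x -> smem N x -> x = oone G).
  { apply genL_meet_trivial; auto. destruct hnt as [x [hx ne]].
    exists x. split; auto. }
  apply (projB_iso (genL_normal (l := l)) (proj1 hN) hLN (fun m hm => proj1 (genL_cons l hN m) (hsub m hm)));
    [auto | auto | apply hN | auto].
Qed.

Definition simple_sub_isotypic (l : list (OSub G)) : Prop :=
  forall M : OSub G, simple (subG M) -> normalises (genL l) M -> inclS M (genL l) ->
    inclS M (genP G (fun N => In N l /\ iso (subG N) (subG M))).

Lemma isotypic_mono l N (K M : OSub G) : iso (subG K) (subG M) ->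
  inclS (genP G (fun N' => In N' l /\ iso (subG N') (subG K)))
        (genP G (fun N' => In N' (N :: l) /\ iso (subG N') (subG M))).
Proof.
  intro hK. apply genP_mono. intros N' _ [h1 h2].
  split; [right; auto | apply iso_trans with (subG K); auto].
Qed.

(* If M is not inside <l>, then <N :: l> = <l> x N and M projects
   isomorphically onto N; the <l>-component of M is either trivial or again
   a simple subgroup isomorphic to M, to which the induction applies. *)
Lemma simple_sub_isotypic_cons l N : inZ N ->
  simple_sub_isotypic l -> simple_sub_isotypic (N :: l).
Proof.
  intros hN IH M sM hnorm hsub.
  pose proof (fun K : OSub G => isotypic_mono (l := l) (N := N) (K := K) (M := M)) as Q_mono.
  destruct (classic (inclS M (genL l))) as [hs | hns].
  { intros x hx. apply (Q_mono M (iso_refl _)), IH; auto.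
    intros y x' hy hx'. apply hnorm; auto. apply genL_sub; auto. }
  apply not_all_ex_not in hns. destruct hns as [m0 hm0].
  apply imply_to_and in hm0. destruct hm0 as [hm0M hm0L].
  assert (hML : forall y, smem M y -> smem (genL l) y -> y = oone G).
  { destruct (simple_meet sM (P := genL l)) as [h | h]; auto.
    - intros y x _ hx. apply genL_normal; auto.
    - exfalso; apply hm0L; auto. }
  assert (hLN : forall x, smem (genL l) x -> smem N x -> x = oone G)
    by (apply genL_meet_trivial; eauto).
  pose (hdec := fun m hm => proj1 (genL_cons l hN m) (hsub m hm)).
  assert (isoMN : iso (subG M) (subG N)).
  { apply genL_cons_iso with l; auto.
    - intros y x hy hx. apply hnorm; auto. apply genP_in with N; simpl; auto.
    - exists m0. split; auto. intros ->. apply hm0L, smem1. }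
  pose proof (proj_morph (genL_normal (l := l)) (proj1 hN) hLN hdec) as [hpa hpb].
  intros x hx. destruct (proj_spec hdec (exist _ x hx)) as [ha [hb e]].
  change (x = projA hdec (exist _ x hx) ** projB hdec (exist _ x hx)) in e.
  rewrite e. apply smemM.
  - destruct (simple_morph hpa sM) as [h | h]; [rewrite h; apply smem1 |].
    assert (isoR : iso (subG M) (subG (rangeS hpa))) by (apply iso_rangeS; auto).
    apply (Q_mono _ (iso_sym isoR)), IH.
    + apply simple_iso with (subG M); auto.
    + intros y x' hy [m <-]. apply (projA_conj (genL_normal (l := l)) (proj1 hN) hLN hdec); auto.
      intros y' x'' hy' hx''. apply hnorm; auto. apply genL_sub; auto.
    + intros x' [m <-]. apply proj_spec.
    + eexists; eauto.
  - apply genP_in with N; auto. split; [left; auto | apply iso_sym; auto].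
Qed.

Lemma simple_sub_genL l : (forall N, In N l -> inZ N) -> simple_sub_isotypic l.
Proof.
  induction l as [|N l IH]; intros hl.
  - intros M _ _ hsub x hx. apply hsub, genL_nil in hx. subst. apply smem1.
  - apply simple_sub_isotypic_cons; [apply hl; left; auto |].
    apply IH. intros; apply hl; right; auto.
Qed.

Lemma normal_meet_genL l : (forall N, In N l -> inZ N) ->
  forall L : OSub G, normal L ->
  forall z, smem L z -> smem (genL l) z -> z <> oone G -> exists M, inZ M /\ inclS M L.
Proof.
  intros hl L nL. induction l as [|N l IH]; intros z hz hzl hz1.
  - apply genL_nil in hzl. contradiction.
  - assert (hN : inZ N) by (apply hl; left; auto).
    destruct (classic (exists z', smem L z' /\ smem (genL l) z' /\ z' <> oone G))
      as [[z' [h1 [h2 h3]]] | hno].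
    { apply (IH (fun N' h => hl N' (or_intror h)) z'); auto. }
    pose (M0 := capS L (genL (N :: l))).
    assert (nM0 : normal M0) by (apply normal_capS; auto; apply genL_normal).
    assert (isoMN : iso (subG M0) (subG N)).
    { apply genL_cons_iso with l; auto.
      - intros y x _ hx. apply nM0; auto.
      - intros x [_ hx]; auto.
      - intros y [hy _] hyl. apply NNPP. intro ne. apply hno. exists y; auto.
      - exists z. split; [split|]; auto. }
    exists M0. split; [split; auto |].
    + apply simple_iso with (subG N); [apply hN | apply iso_sym; auto].
    + intros x [h _]; auto.
Qed.

Lemma genP_list (P : OSub G -> Prop) x : smem (genP G P) x ->
  exists l, (forall N, In N l -> inZ N /\ P N) /\ smem (genL l) x.
Proof.
  revert x. apply genP_ind.
  - exists nil. split; [simpl; tauto | apply smem1].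
  - intros a x [N [h1 [h2 h3]]] [l [hl hx]]. exists (N :: l). split.
    + intros N' [<- | h]; auto.
    + apply smemM; [apply genP_in with N; simpl; auto | apply genL_sub; auto].
Qed.

Lemma simple_sub_genP (P : OSub G -> Prop) (M : OSub G) : simple (subG M) ->
  normalises (genP G P) M -> inclS M (genP G P) ->
  inclS M (genP G (fun N => P N /\ iso (subG N) (subG M))).
Proof.
  intros sM hn hsub.
  destruct (simple_nontriv sM) as [m0 [hm0 ne]].
  destruct (genP_list (hsub m0 hm0)) as [l [hl hm0l]].
  assert (hMl : inclS M (genL l)).
  { destruct (simple_meet sM (P := genL l)) as [h | h]; auto.
    - intros y x _ hx. apply genL_normal; auto.
    - exfalso. apply ne. auto. }
  intros x hx. eapply genP_mono, (simple_sub_genL (fun N h => proj1 (hl N h))); eauto.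
  - intros N _ [h1 h2]. split; auto. apply hl; auto.
  - intros y x' hy hx'. apply hn; auto. revert hy. apply genP_mono. intros N _ h. apply hl; auto.
Qed.

Lemma normal_meet_soc (L : OSub G) : normal L ->
  forall z, smem L z -> smem (soc G) z -> z <> oone G -> exists M, inZ M /\ inclS M L.
Proof.
  intros nL z hz hzs ne. rewrite soc_eq in hzs.
  destruct (genP_list hzs) as [l [hl hzl]].
  apply (normal_meet_genL (fun N h => proj1 (hl N h)) nL hz); auto.
Qed.

Lemma Z_sub_genP (P : OSub G -> Prop) (M : OSub G) :
  inZ M -> inclS M (genP G P) -> exists N, inZ N /\ P N /\ iso (subG N) (subG M).
Proof.
  intros [nM sM] hsub.
  destruct (simple_nontriv sM) as [m [hm ne]].
  assert (h : smem (genP G (fun N => P N /\ iso (subG N) (subG M))) m).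
  { apply simple_sub_genP; auto. intros y x _ hx. apply nM; auto. }
  destruct (genP_nontriv h ne) as [N [hN [h1 h2]]]. eauto.
Qed.

End FinitelyGenerated.

(** * Socle and isotypic components *)

Section Support.
Context {Om : Type}.

Lemma rep_iso (H : OGroup Om) : iso H (rep H).
Proof. unfold rep. apply epsilon_spec. exists H. apply iso_refl. Qed.

Lemma rep_eq (A B : OGroup Om) : iso A B -> rep A = rep B.
Proof.
  intro h. unfold rep.
  assert (e : (fun K => iso A K) = (fun K => iso B K)).
  { apply functional_extensionality; intro K. apply propositional_extensionality.
    split; intro h'; [apply iso_trans with A | apply iso_trans with B]; auto; apply iso_sym; auto. }
  rewrite e. f_equal. apply proof_irrelevance.
Qed.

Lemma Supp_rep (G T : OGroup Om) : Supp G T -> rep T = T.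
Proof. intros [N [_ <-]]. apply rep_eq. apply iso_sym, rep_iso. Qed.

Lemma Supp_iso_eq (G T X : OGroup Om) : Supp G T -> iso X T -> rep X = T.
Proof. intros hT hi. rewrite <- (Supp_rep hT). apply rep_eq; auto. Qed.

Lemma Supp_neq (G G' T U : OGroup Om) : Supp G T -> Supp G' U -> T <> U -> ~ iso T U.
Proof.
  intros hT hU ne hi. apply ne. rewrite <- (Supp_rep hT). apply Supp_iso_eq with G'; auto.
Qed.

Lemma Supp_rep_in (G : OGroup Om) (N : OSub G) : inZ N -> Supp G (rep (subG N)).
Proof. intro hN. exists N; auto. Qed.

End Support.

Section SocleOfSocle.
Context {Om : Type}.
Variable G : OGroup Om.

Lemma inZ_restr (A N : OSub G) : inZ N -> inclS N A -> inZ (restr A N).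
Proof.
  intros [nN sN] hNA. split.
  - intros x y hx. apply nN. exact hx.
  - apply simple_iso with (subG N); auto. apply iso_sym, iso_restr; auto.
Qed.

Lemma inZ_soc_restr N : inZ N -> inZ (restr (soc G) N).
Proof. intro hN. apply inZ_restr; auto. apply inZ_soc; auto. Qed.

Lemma iso_soc_restr N : inZ N -> iso (subG (restr (soc G) N)) (subG N).
Proof. intro hN. apply iso_restr, inZ_soc; auto. Qed.

(* A simple normal subgroup of soc G need not be normal in G, but it is
   normalised by soc G, which is all the isotypic argument needs. *)
Lemma Zsoc_isotypic (M : OSub (subG (soc G))) : inZ M ->
  inclS (up M) (genP G (fun N => True /\ iso (subG N) (subG M))).
Proof.
  intros [nM sM].
  assert (isoU : iso (subG (up M)) (subG M)) by apply iso_up.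
  apply (inclS_trans (B := genP G (fun N => True /\ iso (subG N) (subG (up M))))).
  - apply simple_sub_genP.
    + apply simple_iso with (subG M); auto. apply iso_sym; auto.
    + rewrite <- soc_eq. intros y u hy [m [hm <-]].
      exists (conjg (exist _ y hy : subG (soc G)) m). split; [apply nM; auto | reflexivity].
    + rewrite <- soc_eq. intros u [m [_ <-]]. exact (proj2_sig m).
  - apply genP_mono. intros N _ [_ hi]. split; auto. apply iso_trans with (subG (up M)); auto.
Qed.

Theorem GS_soc (S : OGroup Om) (x : G) : smem (GS G S) x <-> smem (up (GS (subG (soc G)) S)) x.
Proof.
  split; intro h.
  - apply (gen_min h). intros n [N [hN [hiso hn]]].
    exists (exist _ n (inZ_soc hN hn)). split; [|reflexivity].
    apply gen_in. exists (restr (soc G) N). split; [|split]; auto.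
    + apply inZ_soc_restr; auto.
    + apply iso_trans with (subG N); auto. apply iso_soc_restr; auto.
  - destruct h as [y [hy <-]]. apply (gen_min (K := restr (soc G) (GS G S)) hy).
    intros m [M [hM [hiso hm]]]. change (smem (GS G S) (sv m)).
    rewrite GS_eq. apply (genP_mono (P := fun N => True /\ iso (subG N) (subG M))).
    + intros N _ [_ h]. apply iso_trans with (subG M); auto.
    + apply Zsoc_isotypic; auto. exists m; auto.
Qed.

Theorem Supp_soc (X : OGroup Om) : Supp G X <-> Supp (subG (soc G)) X.
Proof.
  split.
  - intros [N [hN <-]]. exists (restr (soc G) N). split.
    + apply inZ_soc_restr; auto.
    + apply rep_eq, iso_soc_restr; auto.
  - intros [M [hM <-]].
    destruct (simple_nontriv (proj2 hM)) as [m [hm ne]].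
    destruct (genP_nontriv (Zsoc_isotypic hM (x := sv m) (ex_intro _ m (conj hm eq_refl))))
      as [N [hN [_ hiso]]].
    { intro e. apply ne. apply sig_ext. exact e. }
    exists N. split; auto. apply rep_eq; auto.
Qed.

End SocleOfSocle.

Section IsotypicDecomposition.
Context {Om : Type}.
Variables G S : OGroup Om.

(* The complement of G_S in soc G. *)
Definition CS : OSub G := genP G (fun N => ~ iso (subG N) S).

Lemma GS_in N x : inZ N -> iso (subG N) S -> smem N x -> smem (GS G S) x.
Proof. intros. apply gen_in. exists N; auto. Qed.

Lemma CS_in N x : inZ N -> ~ iso (subG N) S -> smem N x -> smem CS x.
Proof. intros. apply genP_in with N; auto. Qed.

Lemma GS_normal : normal (GS G S).
Proof. rewrite GS_eq. apply genP_normal. Qed.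

Lemma CS_normal : normal CS.
Proof. apply genP_normal. Qed.

Lemma GS_CS_commute a c : smem (GS G S) a -> smem CS c -> a ** c = c ** a.
Proof. rewrite GS_eq. apply genP_commute. auto. Qed.

Lemma GS_CS_trivial x : smem (GS G S) x -> smem CS x -> x = oone G.
Proof.
  intros hx hx'. apply NNPP. intro ne.
  destruct (normal_meet_soc (L := capS (GS G S) CS)) with (z := x) as [M [hM hML]]; auto.
  - apply normal_capS; [apply GS_normal | apply CS_normal].
  - split; auto.
  - rewrite soc_eq. revert hx. rewrite GS_eq. apply genP_mono. auto.
  - destruct (Z_sub_genP hM (fun m hm => proj1 (hML m hm))) as [N1 [_ [i1 j1]]].
    destruct (Z_sub_genP hM (fun m hm => proj2 (hML m hm))) as [N2 [_ [i2 j2]]].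
    apply i2. apply iso_trans with (subG M); auto. apply iso_trans with (subG N1); auto.
    apply iso_sym; auto.
Qed.

Lemma GS_CS_dec x : smem (soc G) x -> exists a c, smem (GS G S) a /\ smem CS c /\ x = a ** c.
Proof.
  rewrite soc_eq. revert x. apply genP_ind.
  - exists (oone G), (oone G). split; [apply smem1 | split; [apply smem1 | rewrite omulg1; auto]].
  - intros g x [N [hN [_ hg]]] [a [c [ha [hc ->]]]].
    destruct (classic (iso (subG N) S)) as [hi | hi].
    + exists (g ** a), c. split; [|split]; auto.
      * apply smemM; auto. apply GS_in with N; auto.
      * rewrite omulA; auto.
    + exists a, (g ** c). split; [|split]; auto.
      * apply smemM; auto. apply CS_in with N; auto.
      * rewrite !omulA. f_equal. symmetry. apply GS_CS_commute; auto. apply CS_in with N; auto.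
Qed.

End IsotypicDecomposition.

Lemma GS_CS {Om} (G S T : OGroup Om) : ~ iso S T -> inclS (GS G S) (CS G T).
Proof.
  intros ne x hx. rewrite GS_eq in hx. revert hx. apply genP_mono. intros N _ h h'.
  apply ne. apply iso_trans with (subG N); auto. apply iso_sym; auto.
Qed.

Section Components.
Context {Om : Type}.
Variable G : OGroup Om.
Hypothesis hss : semisimple G.
Variable S : OGroup Om.

Let dec := @GS_CS_dec _ G S.

Definition compS (x : G) : G := projA dec (exist _ x (hss x)).
Definition cocompS (x : G) : G := projB dec (exist _ x (hss x)).

Lemma compS_spec x : smem (GS G S) (compS x) /\ smem (CS G S) (cocompS x) /\
  x = compS x ** cocompS x.
Proof. apply (proj_spec dec). Qed.

Lemma compS_unique x a c : smem (GS G S) a -> smem (CS G S) c -> x = a ** c -> compS x = a.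
Proof. intros ha hc e. eapply proj1, (proj_unique (@GS_CS_trivial _ G S) dec); eauto. Qed.

Lemma compS_GS a : smem (GS G S) a -> compS a = a.
Proof. intro ha. apply compS_unique with (oone G); [auto | apply smem1 | rewrite omulg1; auto]. Qed.

Lemma compS_CS c : smem (CS G S) c -> compS c = oone G.
Proof. intro hc. apply compS_unique with c; [apply smem1 | auto | rewrite omul1g; auto]. Qed.

Lemma compS_morph : morphism compS.
Proof.
  apply (morph_comp (f := fun x => exist _ x (hss x) : subG (soc G))).
  - split; intros; apply sig_ext; reflexivity.
  - apply (proj_morph (@GS_normal _ G S) (@CS_normal _ G S) (@GS_CS_trivial _ G S)).
Qed.

Definition piS (x : G) : subG (GS G S) := exist _ (compS x) (proj1 (compS_spec x)).

Lemma piS_morph : morphism piS.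
Proof. split; intros; apply sig_ext; simpl; apply compS_morph. Qed.

Lemma piS_sv (a : subG (GS G S)) : piS (sv a) = a.
Proof. apply sig_ext. simpl. apply compS_GS. exact (proj2_sig a). Qed.

Lemma piS_CS c : smem (CS G S) c -> piS c = oone (subG (GS G S)).
Proof. intro h. apply sig_ext. simpl. apply compS_CS; auto. Qed.

End Components.

Lemma compS_all_trivial {Om} (X : OGroup Om) (hss : semisimple X) z :
  (forall T, Supp X T -> compS hss T z = oone X) -> z = oone X.
Proof.
  intro hz. apply NNPP. intro ne.
  pose (L := capSs (fun T : {T | Supp X T} => kerS (compS_morph hss (proj1_sig T)))).
  assert (nL : normal L) by (apply normal_capSs; intro; apply normal_kerS).
  destruct (normal_meet_soc nL (z := z)) as [M [hM hML]]; auto.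
  - intros [T hT]. apply hz; auto.
  - destruct (simple_nontriv (proj2 hM)) as [m [hm nem]].
    apply nem. rewrite <- (compS_GS hss (S := rep (subG M)) (a := m)).
    + exact (hML m hm (exist _ _ (Supp_rep_in hM))).
    + apply GS_in with M; auto. apply rep_iso.
Qed.

(** * Normal morphisms between semisimple groups *)

Section NormalMorphisms.
Context {Om : Type}.

Lemma normal_mor_Z {G K : OGroup Om} (f : G -> K) (hf : normal_mor f) (N : OSub G) : inZ N ->
  (forall n, smem N n -> f n = oone K) \/
  (inZ (imgS (proj1 hf) N) /\ iso (subG N) (subG (imgS (proj1 hf) N))).
Proof.
  intros [nN sN]. destruct (simple_morph_on (proj1 hf) sN) as [h | h]; [left; auto | right].
  assert (hi : iso (subG N) (subG (imgS (proj1 hf) N))) by (apply iso_imgS; auto).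
  split; auto. split; [apply (proj2 hf); auto | apply simple_iso with (subG N); auto].
Qed.

Lemma normal_mor_GS {G K : OGroup Om} (f : G -> K) (hf : normal_mor f) S x :
  smem (GS G S) x -> smem (GS K S) (f x).
Proof.
  rewrite GS_eq. revert x. apply genP_ind.
  - rewrite (morph1 (proj1 hf)). apply smem1.
  - intros a x [N [hN [hi ha]]] hx. rewrite (proj1 (proj1 hf)). apply smemM; auto.
    destruct (normal_mor_Z hf hN) as [h | [h1 h2]].
    + rewrite h; auto. apply smem1.
    + apply GS_in with (imgS (proj1 hf) N); auto.
      * apply iso_trans with (subG N); auto. apply iso_sym; auto.
      * exists a; auto.
Qed.

Lemma normal_mor_range {A B : OGroup Om} (K : OSub B) (f : A -> subG K) (hf : normal_mor f) :
  normalises K (rangeS (morph_comp (proj1 hf) (morph_sv K))).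
Proof.
  intros y x hy [a <-].
  destruct ((proj2 hf) (fullS _) (fun _ _ _ => I) (f a) (exist _ y hy)) as [b [_ eb]].
  - exists a; split; auto. exact I.
  - exists b. simpl. rewrite eb. reflexivity.
Qed.

Lemma normal_up_GS (G S : OGroup Om) : semisimple G ->
  forall P : OSub (subG (GS G S)), normal P -> normal (up P).
Proof.
  intro hss. apply normal_up_central. intro g.
  destruct (GS_CS_dec S (hss g)) as [a [c [ha [hc ->]]]].
  exists a, c. split; [|split]; auto.
  intros h' hh'. symmetry. apply (GS_CS_commute (S := S)); auto.
Qed.

Theorem normal_mor_component (G G' : OGroup Om) (hss : semisimple G) (f : G -> G') (S : OGroup Om) :
  normal_mor f -> exists g : subG (GS G S) -> subG (GS G' S),
    (forall x, sv (g x) = f (sv x)) /\ normal_mor g.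
Proof.
  intro hf.
  exists (fun x => exist _ (f (sv x)) (normal_mor_GS hf (proj2_sig x))).
  split; [reflexivity | split].
  - split; intros; apply sig_ext; simpl; apply (proj1 hf).
  - intros P nP z y' [p [hp <-]].
    destruct ((proj2 hf) (up P) (normal_up_GS hss nP) (f (sv p)) (sv y'))
      as [x0 [[p0 [hp0 <-]] e]].
    { exists (sv p). split; auto. exists p; auto. }
    exists p0. split; auto. apply sig_ext. simpl. rewrite e. reflexivity.
Qed.

End NormalMorphisms.

Section NormalHomBijection.
Context {Om : Type}.
Variables G G' : OGroup Om.
Hypothesis hss : semisimple G.
Hypothesis hss' : semisimple G'.

Definition CommonSupp := {S : OGroup Om | Supp G S /\ Supp G' S}.

(* A normal morphism kills every simple normal subgroup whose type is
   missing from Supp G', so it is determined by its components. *)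
Lemma normal_mor_ext (f1 f2 : G -> G') : normal_mor f1 -> normal_mor f2 ->
  (forall (s : CommonSupp) (a : subG (GS G (proj1_sig s))), f1 (sv a) = f2 (sv a)) ->
  forall x, f1 x = f2 x.
Proof.
  intros h1 h2 h x. generalize (hss x). rewrite soc_eq. revert x. apply genP_ind.
  - rewrite (morph1 (proj1 h1)), (morph1 (proj1 h2)). auto.
  - intros g x [N [hN [_ hg]]] hx.
    rewrite (proj1 (proj1 h1)), (proj1 (proj1 h2)), hx. f_equal.
    pose (S0 := rep (subG N)).
    assert (hgS : smem (GS G S0) g) by (apply GS_in with N; auto; apply rep_iso).
    destruct (classic (Supp G' S0)) as [h' | h'].
    + apply (h (exist _ S0 (conj (Supp_rep_in hN) h')) (exist _ g hgS)).
    + assert (triv : forall f (hf : normal_mor f), f g = oone G').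
      { intros f hf. destruct (normal_mor_Z hf hN) as [e | [hZ hi]]; auto.
        exfalso. apply h'. exists (imgS (proj1 hf) N). split; auto.
        apply rep_eq. apply iso_sym; auto. }
      rewrite (triv _ h1), (triv _ h2). auto.
Qed.

Section Gluing.
Local Unset Implicit Arguments.
Variable t : forall s : CommonSupp,
  {g : subG (GS G (proj1_sig s)) -> subG (GS G' (proj1_sig s)) | normal_mor g}.
Let tfun (s : CommonSupp) := proj1_sig (t s).
Let tfun_normal (s : CommonSupp) : normal_mor (tfun s) := proj2_sig (t s).

(* An element of G' is determined by its components (compS_all_trivial), so
   the morphism glued from t is defined by prescribing them. *)
Definition prescribed (x : G) (y : G') : Prop :=
  (forall s : CommonSupp, compS hss' (proj1_sig s) y = sv (tfun s (piS hss (proj1_sig s) x))) /\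
  (forall T, Supp G' T -> ~ Supp G T -> compS hss' T y = oone G').

Lemma tfun1 s : tfun s (oone _) = oone _.
Proof. apply (morph1 (proj1 (tfun_normal s))). Qed.

Lemma prescribed_unique x y1 y2 : prescribed x y1 -> prescribed x y2 -> y1 = y2.
Proof.
  intros [a1 b1] [a2 b2].
  assert (e : y1 ** oinv y2 = oone G').
  { apply (compS_all_trivial (hss := hss')). intros T hT.
    rewrite (proj1 (compS_morph hss' T)), (morphV (compS_morph hss' T)).
    destruct (classic (Supp G T)) as [h | h].
    - pose (s := exist _ T (conj h hT) : CommonSupp).
      change T with (proj1_sig s). rewrite (a1 s), (a2 s). apply omulgV.
    - rewrite (b1 T hT h), (b2 T hT h), oinv1. apply omulg1. }
  apply invg_unique_l in e. rewrite invgK in e. auto.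
Qed.

Lemma prescribed_one : prescribed (oone G) (oone G').
Proof.
  split.
  - intro s. rewrite (morph1 (compS_morph hss' _)), (morph1 (piS_morph hss _)), tfun1. reflexivity.
  - intros. apply (morph1 (compS_morph hss' _)).
Qed.

Lemma prescribed_mul x1 x2 y1 y2 :
  prescribed x1 y1 -> prescribed x2 y2 -> prescribed (x1 ** x2) (y1 ** y2).
Proof.
  intros [a1 b1] [a2 b2]. split.
  - intro s. rewrite (proj1 (compS_morph hss' _)), a1, a2, (proj1 (piS_morph hss _)),
      (proj1 (proj1 (tfun_normal s))). reflexivity.
  - intros T hT hnT. rewrite (proj1 (compS_morph hss' _)), (b1 T hT hnT), (b2 T hT hnT).
    apply omulg1.
Qed.

Lemma prescribed_act w x y : prescribed x y -> prescribed (oact w x) (oact w y).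
Proof.
  intros [a1 b1]. split.
  - intro s. rewrite (proj2 (compS_morph hss' _)), a1, (proj2 (piS_morph hss _)),
      (proj2 (proj1 (tfun_normal s))). reflexivity.
  - intros T hT hnT. rewrite (proj2 (compS_morph hss' _)), (b1 T hT hnT). apply oact1.
Qed.

Lemma prescribed_GS (s : CommonSupp) (a : subG (GS G (proj1_sig s))) :
  prescribed (sv a) (sv (tfun s a)).
Proof.
  assert (hG'C : forall T, Supp G' T -> T <> proj1_sig s -> smem (CS G' T) (sv (tfun s a))).
  { intros T hT ne. apply (GS_CS (S := proj1_sig s)); [| exact (proj2_sig (tfun s a))].
    apply (Supp_neq (proj2 (proj2_sig s)) hT). auto. }
  split.
  - intro s'. destruct (classic (proj1_sig s' = proj1_sig s)) as [e | ne].
    + assert (es : s' = s) by (apply sig_ext; auto). subst s'.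
      rewrite (compS_GS hss' (a := sv (tfun s a)) (proj2_sig (tfun s a))), (piS_sv hss a).
      reflexivity.
    + rewrite (compS_CS hss' (hG'C _ (proj2 (proj2_sig s')) ne)), (piS_CS hss), tfun1;
        [reflexivity |].
      apply (GS_CS (S := proj1_sig s)); [| exact (proj2_sig a)].
      apply (Supp_neq (proj1 (proj2_sig s)) (proj1 (proj2_sig s'))). auto.
  - intros T hT hnT. apply (compS_CS hss'), hG'C; auto.
    intro e. apply hnT. rewrite e. apply (proj2_sig s).
Qed.

Lemma prescribed_outside (N : OSub G) g : inZ N -> smem N g ->
  ~ Supp G' (rep (subG N)) -> prescribed g (oone G').
Proof.
  intros hN hg hn. split.
  - intros [S [hS hS']]. simpl. rewrite (morph1 (compS_morph hss' _)), (piS_CS hss), tfun1;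
      [reflexivity |].
    apply CS_in with N; auto. intro hi. apply hn. rewrite (Supp_iso_eq hS hi). auto.
  - intros. apply (morph1 (compS_morph hss' _)).
Qed.

Lemma prescribed_exists x : exists y, prescribed x y.
Proof.
  generalize (hss x). rewrite soc_eq. revert x. apply genP_ind.
  - exists (oone G'). apply prescribed_one.
  - intros g x [N [hN [_ hg]]] [y hy].
    destruct (classic (Supp G' (rep (subG N)))) as [h' | h'].
    + pose (s0 := exist _ (rep (subG N)) (conj (Supp_rep_in hN) h') : CommonSupp).
      assert (hgS : smem (GS G (proj1_sig s0)) g) by (apply GS_in with N; auto; apply rep_iso).
      exists (sv (tfun s0 (exist _ g hgS)) ** y).
      apply prescribed_mul; auto. apply (prescribed_GS s0 (exist _ g hgS)).
    + exists (oone G' ** y). apply prescribed_mul; auto. apply (prescribed_outside N g hN hg h').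
Qed.

Definition glue (x : G) : G' := proj1_sig (constructive_indefinite_description _ (prescribed_exists x)).

Lemma glue_spec x : prescribed x (glue x).
Proof. unfold glue. destruct (constructive_indefinite_description _ (prescribed_exists x)); auto. Qed.

Lemma glue_morph : morphism glue.
Proof.
  split.
  - intros x1 x2. apply (prescribed_unique (x1 ** x2)); [apply glue_spec |].
    apply prescribed_mul; apply glue_spec.
  - intros w x. apply (prescribed_unique (oact w x)); [apply glue_spec |].
    apply prescribed_act, glue_spec.
Qed.

Lemma glue_GS (s : CommonSupp) (a : subG (GS G (proj1_sig s))) : glue (sv a) = sv (tfun s a).
Proof. apply (prescribed_unique (sv a)); [apply glue_spec | apply prescribed_GS]. Qed.

Lemma glue_conj (N : OSub G) (nN : normal N) (N' : OSub G') (hN' : inZ N') g n :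
  smem N' g -> smem N n -> exists n', smem N n' /\ glue n' = conjg g (glue n).
Proof.
  intros hg hn.
  pose (T := rep (subG N')).
  assert (hT' : Supp G' T) by (apply Supp_rep_in; auto).
  assert (hgT : smem (GS G' T) g) by (apply GS_in with N'; auto; apply rep_iso).
  destruct (compS_spec hss' T (glue n)) as [_ [hc ec]].
  assert (gc : g ** cocompS hss' T (glue n) = cocompS hss' T (glue n) ** g)
    by (apply (GS_CS_commute (S := T)); auto).
  destruct (classic (Supp G T)) as [hT | hT].
  - pose (s := exist _ T (conj hT hT') : CommonSupp).
    assert (eu : compS hss' T (glue n) = sv (tfun s (piS hss T n))) by apply (proj1 (glue_spec n) s).
    pose (R := rangeS (morph_comp (proj1 (tfun_normal s)) (morph_sv _))).
    assert (nR : normalises N' R).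
    { intros y x hy hx. apply (normal_mor_range (hf := tfun_normal s)); auto.
      apply GS_in with N'; auto. apply rep_iso. }
    destruct (simple_meet (proj2 hN') nR) as [h | h].
    + (* g centralises the image of t_T, hence all of glue n *)
      exists n. split; auto.
      assert (hcomm : g ** compS hss' T (glue n) = compS hss' T (glue n) ** g).
      { apply (commute_trivial_meet (A := N') (B := R)); auto.
        - intros y x _ hx. apply (proj1 hN'); auto.
        - rewrite eu. exists (piS hss T n). reflexivity. }
      rewrite ec at 2. rewrite conjMg, !conjg_commute; auto.
    + (* g = t_T a, and conjugating by a in G does the job *)
      destruct (h g hg) as [a ea].
      exists (conjg (sv a) n). split; [apply nN; auto |].
      rewrite (morph_conjg glue_morph). f_equal. rewrite <- ea. apply (glue_GS s a).
  - exists n. split; auto.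
    assert (ef : glue n = cocompS hss' T (glue n)).
    { rewrite ec at 1. rewrite (proj2 (glue_spec n) T hT' hT). apply omul1g. }
    rewrite ef. symmetry. apply conjg_commute. symmetry. exact gc.
Qed.

Lemma glue_normal : normal_mor glue.
Proof.
  split; [apply glue_morph |].
  intros N nN z y [n [hn <-]].
  cut (forall y, smem (soc G') y ->
         forall n, smem N n -> exists n', smem N n' /\ glue n' = conjg y (glue n)).
  { intro h. destruct (h y (hss' y) n hn) as [n' [h1 h2]]. exists n'; auto. }
  rewrite soc_eq.
  apply (genP_ind (Q := fun y => forall n, smem N n ->
                            exists n', smem N n' /\ glue n' = conjg y (glue n))).
  - intros n0 h0. exists n0. split; auto. rewrite conjg1. auto.
  - intros g y0 [N' [hN' [_ hg]]] IH n0 h0.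
    destruct (glue_conj N nN N' hN' g n0 hg h0) as [n1 [h1 e1]].
    destruct (IH n1 h1) as [n2 [h2 e2]]. exists n2. split; auto.
    rewrite conjgM, <- e1. auto.
Qed.

End Gluing.

Theorem normal_hom_components_bij
  (Phi : {f : G -> G' | normal_mor f} ->
         forall s : CommonSupp,
           {g : subG (GS G (proj1_sig s)) -> subG (GS G' (proj1_sig s)) | normal_mor g}) :
  (forall f s x, sv (proj1_sig (Phi f s) x) = proj1_sig f (sv x)) -> bij Phi.
Proof.
  intro hPhi. split.
  - intros [f1 h1] [f2 h2] e. apply sig_ext. simpl. apply functional_extensionality.
    apply normal_mor_ext; auto. intros s a.
    pose proof (f_equal (fun F => sv (proj1_sig (F s) a)) e) as e'. cbv beta in e'.
    rewrite !hPhi in e'. exact e'.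
  - intro t. exists (exist _ (glue t) (glue_normal t)).
    apply functional_extensionality_dep. intro s. apply sig_ext.
    apply functional_extensionality. intro a. apply sig_ext.
    change (sv (proj1_sig (Phi (exist _ (glue t) (glue_normal t)) s) a) = sv (proj1_sig (t s) a)).
    rewrite hPhi. simpl. apply (glue_GS t s a).
Qed.

End NormalHomBijection.

(** * Restricted direct sums *)

Section DirectSums.
Local Unset Implicit Arguments.
Context {Om : Type} {I : Type} {F : I -> OGroup Om}.

Definition single (i : I) (h : F i) : dsum F.
Proof.
  refine (exist _ (fun j => match excluded_middle_informative (i = j) with
                            | left e => eq_rect i F h j e
                            | right _ => oone (F j)
                            end) _).
  exists (i :: nil). intros j hj.
  destruct (excluded_middle_informative (i = j)) as [e | ne]; auto.
  exfalso. apply hj. left. auto.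
Defined.

Lemma single_i i h : dcomp (single i h) i = h.
Proof.
  unfold dcomp, single. simpl.
  destruct (excluded_middle_informative (i = i)) as [e | ne]; [| exfalso; auto].
  rewrite (proof_irrelevance _ e eq_refl). reflexivity.
Qed.

Lemma single_j i h j : i <> j -> dcomp (single i h) j = oone (F j).
Proof.
  intro ne. unfold dcomp, single. simpl.
  destruct (excluded_middle_informative (i = j)) as [e | _]; auto. contradiction.
Qed.

Lemma dsum_ext (x y : dsum F) : (forall i, dcomp x i = dcomp y i) -> x = y.
Proof. intro h. apply sig_ext. apply functional_extensionality_dep. exact h. Qed.

(* x = x' * single a (x a), where x' is x with its a-coordinate erased. *)
Lemma dsum_ind (R : dsum F -> Prop) :
  R (oone (dsum F)) -> (forall x y, R x -> R y -> R (x ** y)) -> (forall i h, R (single i h)) ->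
  forall x, R x.
Proof.
  intros h1 hM hS x. destruct (proj2_sig x) as [l hl].
  revert x hl. induction l as [|a l IH]; intros x hl.
  - replace x with (oone (dsum F)); auto.
    apply dsum_ext. intro i. symmetry. apply hl. simpl; auto.
  - pose (erase := fun j => match excluded_middle_informative (a = j) with
                            | left _ => oone (F j)
                            | right _ => dcomp x j
                            end).
    assert (fs : forall j, ~ In j l -> erase j = oone (F j)).
    { intros j hj. unfold erase. destruct (excluded_middle_informative (a = j)); auto.
      apply hl. intros [e | e]; auto. }
    replace x with ((exist _ erase (ex_intro _ l fs) : dsum F) ** single a (dcomp x a)).
    + apply hM; auto.
    + apply dsum_ext. intro j. change (erase j ** dcomp (single a (dcomp x a)) j = dcomp x j).
      unfold erase. destruct (excluded_middle_informative (a = j)) as [e | ne].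
      * subst j. rewrite omul1g. apply single_i.
      * rewrite single_j; auto. apply omulg1.
Qed.

End DirectSums.

Section CanonicalMorphisms.
Context {Om : Type} {X : OGroup Om} {I : Type} (K : I -> OSub X).

Lemma canonical_single th : canonical_mor K th ->
  forall i h, th (single (F := fun i => subG (K i)) i h) = sv h.
Proof.
  intros [_ hc] i h. rewrite (hc _ i), single_i; auto.
  intros j ne. apply (single_j (F := fun i => subG (K i)) i h j). auto.
Qed.

Lemma canonical_ind th (P : X -> Prop) : canonical_mor K th ->
  P (oone X) -> (forall x y, P x -> P y -> P (x ** y)) ->
  (forall i (h : subG (K i)), P (sv h)) -> forall x, P (th x).
Proof.
  intros hc h1 hM hS. apply dsum_ind.
  - rewrite (morph1 (proj1 hc)). auto.
  - intros x y e1 e2. rewrite (proj1 (proj1 hc)). auto.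
  - intros i h. rewrite (canonical_single hc). auto.
Qed.

Lemma canonical_unique th1 th2 : canonical_mor K th1 -> canonical_mor K th2 ->
  forall x, th1 x = th2 x.
Proof.
  intros h1 h2. apply dsum_ind.
  - rewrite (morph1 (proj1 h1)), (morph1 (proj1 h2)). auto.
  - intros x y e1 e2. rewrite (proj1 (proj1 h1)), (proj1 (proj1 h2)), e1, e2. auto.
  - intros i h. rewrite (canonical_single h1), (canonical_single h2). auto.
Qed.

End CanonicalMorphisms.

Section DirectDecomposition.
Local Unset Implicit Arguments.
Context {Om : Type}.
Variable G : OGroup Om.
Variable I : Type.
Variable H : I -> OSub G.
Hypothesis hCC : CC H.
Variable theta : dsum (fun i => subG (H i)) -> G.
Hypothesis hcan : canonical_mor H theta.
Hypothesis hbij : bij theta.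

Definition theta_inv (g : G) : dsum (fun i => subG (H i)) :=
  proj1_sig (constructive_indefinite_description _ (proj2 hbij g)).

Lemma thetaK_inv g : theta (theta_inv g) = g.
Proof. unfold theta_inv. destruct (constructive_indefinite_description _ (proj2 hbij g)); auto. Qed.

Lemma theta_invK x : theta_inv (theta x) = x.
Proof. apply (proj1 hbij). apply thetaK_inv. Qed.

Definition dproj (i : I) (g : G) : subG (H i) := dcomp (theta_inv g) i.

Lemma dproj_morph i : morphism (dproj i).
Proof.
  pose proof (morph_inverse (proj1 hcan) theta_invK thetaK_inv) as hinv.
  split; intros; unfold dproj; [rewrite (proj1 hinv) | rewrite (proj2 hinv)]; reflexivity.
Qed.

Lemma dproj_sv i (h : subG (H i)) : dproj i (sv h) = h.
Proof.
  unfold dproj. rewrite <- (canonical_single hcan h), theta_invK.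
  apply (single_i (F := fun i => subG (H i))).
Qed.

Lemma dproj_trivial g : (forall i, dproj i g = oone _) -> g = oone G.
Proof.
  intro h. rewrite <- (thetaK_inv g).
  replace (theta_inv g) with (oone (dsum (fun i => subG (H i)))).
  - apply (morph1 (proj1 hcan)).
  - apply dsum_ext. intro i. symmetry. apply h.
Qed.

Lemma dec_component i g : exists h c, smem (H i) h /\
  (forall h', smem (H i) h' -> c ** h' = h' ** c) /\ g = h ** c.
Proof.
  rewrite <- (thetaK_inv g).
  apply (canonical_ind (P := fun g => exists h c, smem (H i) h /\
    (forall h', smem (H i) h' -> c ** h' = h' ** c) /\ g = h ** c) hcan).
  - exists (oone G), (oone G). split; [apply smem1 | split].
    + intros; symmetry; apply commute1.
    + rewrite omulg1; auto.
  - intros x y [h1 [c1 [a1 [b1 e1]]]] [h2 [c2 [a2 [b2 e2]]]]. exists (h1 ** h2), (c1 ** c2).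
    split; [apply smemM; auto | split].
    + intros h' hh'. symmetry. apply commuteM; symmetry; auto.
    + subst. rewrite !omulA. f_equal. rewrite <- !omulA. f_equal. auto.
  - intros j h. destruct (classic (j = i)) as [e | ne].
    + subst j. exists (sv h), (oone G). split; [exact (proj2_sig h) | split].
      * intros; symmetry; apply commute1.
      * rewrite omulg1; auto.
    + exists (oone G), (sv h). split; [apply smem1 | split].
      * intros h' hh'. apply (hCC i j); auto. exact (proj2_sig h).
      * rewrite omul1g; auto.
Qed.

Lemma inZ_up i (N : OSub (subG (H i))) : inZ N -> inZ (up N).
Proof.
  intros [nN sN]. split.
  - apply (normal_up_central (dec_component i)); auto.
  - apply simple_iso with (subG N); auto. apply iso_sym, iso_up.
Qed.

Lemma inZ_dproj i (N : OSub G) : inZ N ->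
  (forall n, smem N n -> dproj i n = oone _) \/
  (inZ (imgS (dproj_morph i) N) /\ iso (subG N) (subG (imgS (dproj_morph i) N))).
Proof.
  intros [nN sN].
  destruct (simple_morph_on (dproj_morph i) sN) as [h | h]; [left; auto | right].
  assert (hi : iso (subG N) (subG (imgS (dproj_morph i) N))) by (apply iso_imgS; auto).
  split; auto. split.
  - intros x y [n [hn <-]]. exists (conjg (sv y) n). split; [apply nN; auto |].
    rewrite (morph_conjg (dproj_morph i)), dproj_sv. reflexivity.
  - apply simple_iso with (subG N); auto.
Qed.

Theorem Supp_dsum (X : OGroup Om) : Supp G X <-> exists i, Supp (subG (H i)) X.
Proof.
  split.
  - intros [N [hN <-]]. destruct (simple_nontriv (proj2 hN)) as [n [hn ne]].
    assert (hi : exists i, dproj i n <> oone _).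
    { apply NNPP. intro hno. apply ne. apply dproj_trivial. intro i.
      apply NNPP. intro h. apply hno. exists i; auto. }
    destruct hi as [i hi]. exists i.
    destruct (inZ_dproj i N hN) as [h | [hZ hiso]]; [exfalso; apply hi; auto |].
    exists (imgS (dproj_morph i) N). split; auto. symmetry. apply rep_eq; auto.
  - intros [i [N [hN <-]]]. exists (up N). split; [apply inZ_up; auto | apply rep_eq, iso_up].
Qed.

(* Everything below holds for any subgroup functor F generated by the simple
   normal subgroups of an isomorphism-invariant type Q: soc is Q = True,
   G_S is Q = (iso S). *)
Section Functor.
Variable Q : OGroup Om -> Prop.
Hypothesis hQ : forall A B, iso A B -> Q A -> Q B.
Variable Fs : forall X : OGroup Om, OSub X.
Hypothesis hF : forall X, Fs X = genP X (fun N => Q (subG N)).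

Let K (i : I) : OSub (subG (Fs G)) := restr (Fs G) (up (Fs (subG (H i)))).

Lemma up_Fs_sub i x : smem (up (Fs (subG (H i)))) x -> smem (Fs G) x.
Proof.
  intros [y [hy <-]]. rewrite hF in hy |- *.
  apply (gen_min (K := restr (H i) (genP G (fun N => Q (subG N)))) hy).
  intros a [N [hN [hq ha]]]. change (smem (genP G (fun N => Q (subG N))) (sv a)).
  apply (genP_in (N := up N)); [apply inZ_up; auto | | exists a; auto].
  apply (hQ (subG N)); auto. apply iso_sym, iso_up.
Qed.

Lemma Fs_CC : CC K.
Proof.
  intros i j ne x y [x0 [_ ex]] [y0 [_ ey]]. apply sig_ext.
  change (sv y ** sv x = sv x ** sv y). apply (hCC i j ne).
  - rewrite <- ex. exact (proj2_sig x0).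
  - rewrite <- ey. exact (proj2_sig y0).
Qed.

Lemma K_sub i (z : subG (K i)) : smem (H i) (sv (sv z)).
Proof.
  destruct (proj2_sig z) as [y0 [_ e]]. unfold sv in *. rewrite <- e. exact (proj2_sig y0).
Qed.

Definition dsum_incl (x : dsum (fun i => subG (K i))) : dsum (fun i => subG (H i)).
Proof.
  refine (exist _ (fun i => exist (smem (H i)) (sv (sv (dcomp x i))) (K_sub i (dcomp x i))) _).
  destruct (proj2_sig x) as [l hl]. exists l. intros j hj. apply sig_ext. simpl.
  unfold dcomp. rewrite (hl j hj). reflexivity.
Defined.

Lemma dsum_incl_morph : morphism dsum_incl.
Proof. split; intros; apply dsum_ext; intro i; apply sig_ext; reflexivity. Qed.

Lemma theta_incl_single x i : (forall j, j <> i -> dcomp x j = oone _) ->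
  theta (dsum_incl x) = sv (sv (dcomp x i)).
Proof.
  intro h. rewrite ((proj2 hcan) (dsum_incl x) i); [reflexivity |].
  intros j ne. apply sig_ext. simpl. rewrite (h j ne). reflexivity.
Qed.

Lemma theta_incl_in x : smem (Fs G) (theta (dsum_incl x)).
Proof.
  apply (dsum_ind (fun x => smem (Fs G) (theta (dsum_incl x)))).
  - rewrite (morph1 dsum_incl_morph), (morph1 (proj1 hcan)). apply smem1.
  - intros y z h1 h2. rewrite (proj1 dsum_incl_morph), (proj1 (proj1 hcan)). apply smemM; auto.
  - intros i h. rewrite (theta_incl_single _ i).
    + rewrite (single_i (F := fun i => subG (K i))). exact (proj2_sig (sv h)).
    + intros j ne. apply (single_j (F := fun i => subG (K i))). auto.
Qed.

Definition theta_F (x : dsum (fun i => subG (K i))) : subG (Fs G) :=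
  exist _ (theta (dsum_incl x)) (theta_incl_in x).

Lemma theta_F_canonical : canonical_mor K theta_F.
Proof.
  split; [split |].
  - intros x y. apply sig_ext. change (theta (dsum_incl (x ** y)) =
      theta (dsum_incl x) ** theta (dsum_incl y)).
    rewrite (proj1 dsum_incl_morph), (proj1 (proj1 hcan)). reflexivity.
  - intros w x. apply sig_ext. change (theta (dsum_incl (oact w x)) =
      oact w (theta (dsum_incl x))).
    rewrite (proj2 dsum_incl_morph), (proj2 (proj1 hcan)). reflexivity.
  - intros x i hx. apply sig_ext. apply theta_incl_single. auto.
Qed.

(* dproj i maps each generator of F(G) to 1 or into an isomorphic simple
   normal subgroup of H_i. *)
Lemma dproj_Fs i g : smem (Fs G) g -> smem (Fs (subG (H i))) (dproj i g).
Proof.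
  rewrite !hF. revert g. apply genP_ind.
  - rewrite (morph1 (dproj_morph i)). apply smem1.
  - intros a x [N [hN [hq ha]]] hx. rewrite (proj1 (dproj_morph i)). apply smemM; auto.
    destruct (inZ_dproj i N hN) as [h | [hZ hiso]].
    + rewrite h; auto. apply smem1.
    + apply (genP_in (N := imgS (dproj_morph i) N)); auto; [| exists a; auto].
      apply (hQ (subG N)); auto.
Qed.

Lemma theta_F_bij : bij theta_F.
Proof.
  split.
  - intros x y exy. apply (f_equal (@sv _ _ _)) in exy. apply (proj1 hbij) in exy.
    apply dsum_ext. intro i. apply (f_equal (fun z => sv (dcomp z i))) in exy.
    apply sig_ext, sig_ext. exact exy.
  - intro y.
    assert (hup : forall i, smem (up (Fs (subG (H i)))) (sv (dproj i (sv y))))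
      by (intro i; exists (dproj i (sv y)); split; auto; apply dproj_Fs; exact (proj2_sig y)).
    pose (xf := fun i => exist (smem (K i))
                  (exist (smem (Fs G)) _ (up_Fs_sub i _ (hup i))) (hup i)).
    assert (fs : finsupp (F := fun i => subG (K i)) xf).
    { destruct (proj2_sig (theta_inv (sv y))) as [l hl]. exists l. intros j hj.
      apply sig_ext, sig_ext. simpl. unfold dproj, dcomp. rewrite (hl j hj). reflexivity. }
    exists (exist _ xf fs). apply sig_ext. simpl.
    transitivity (theta (theta_inv (sv y))); [| apply thetaK_inv]. f_equal.
    apply dsum_ext. intro i. apply sig_ext. reflexivity.
Qed.

Theorem dsum_functor :
  (forall i x, smem (up (Fs (subG (H i)))) x -> smem (Fs G) x) /\
  CC (fun i => restr (Fs G) (up (Fs (subG (H i))))) /\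
  (exists th, canonical_mor (fun i => restr (Fs G) (up (Fs (subG (H i))))) th) /\
  (forall th, canonical_mor (fun i => restr (Fs G) (up (Fs (subG (H i))))) th -> bij th).
Proof.
  split; [exact up_Fs_sub | split; [exact Fs_CC | split]].
  - exists theta_F. exact theta_F_canonical.
  - intros th hth. destruct theta_F_bij as [hi hs].
    assert (e : forall x, th x = theta_F x)
      by (apply canonical_unique; auto; apply theta_F_canonical).
    split.
    + intros x y exy. rewrite !e in exy. auto.
    + intro y. destruct (hs y) as [x <-]. exists x. auto.
Qed.

End Functor.
End DirectDecomposition.

Theorem mainTheorem2 (Om : Type) :
  (* (1) *)
  (forall (G : OGroup Om) (I : Type) (H : I -> OSub G),
     CC H ->
     (exists th, canonical_mor H th /\ bij th) ->
     (* (a),(b),(c) for the socles *)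
     ((forall i x, smem (up (soc (subG (H i)))) x -> smem (soc G) x) /\
      CC (fun i => restr (soc G) (up (soc (subG (H i))))) /\
      (exists th, canonical_mor (fun i => restr (soc G) (up (soc (subG (H i))))) th) /\
      (forall th, canonical_mor (fun i => restr (soc G) (up (soc (subG (H i))))) th ->
                  bij th)) /\
     (* (a),(b),(c) for the S-components *)
     (forall S : OGroup Om, simple S ->
      (forall i x, smem (up (GS (subG (H i)) S)) x -> smem (GS G S) x) /\
      CC (fun i => restr (GS G S) (up (GS (subG (H i)) S))) /\
      (exists th, canonical_mor (fun i => restr (GS G S) (up (GS (subG (H i)) S))) th) /\
      (forall th, canonical_mor (fun i => restr (GS G S) (up (GS (subG (H i)) S))) th ->
                  bij th)) /\
     (* (d) *)
     (forall X : OGroup Om, Supp G X <-> exists i, Supp (subG (H i)) X))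
  /\
  (* (2) *)
  (forall (G S : OGroup Om), simple S ->
     (forall x : G, smem (GS G S) x <-> smem (up (GS (subG (soc G)) S)) x) /\
     (forall X : OGroup Om, Supp G X <-> Supp (subG (soc G)) X))
  /\
  (* (3) *)
  (forall (G G' : OGroup Om), semisimple G -> semisimple G' ->
     (* (a) *)
     (forall (f : G -> G') (S : OGroup Om), normal_mor f -> simple S ->
        exists g : subG (GS G S) -> subG (GS G' S),
          (forall x, sv (g x) = f (sv x)) /\ normal_mor g) /\
     (* (b) : Phi is a bijection, Phi f = t  iff  each t_S is the S-component of f *)
     (forall (Phi : {f : G -> G' | normal_mor f} ->
                    forall s : {S : OGroup Om | Supp G S /\ Supp G' S},
                      {g : subG (GS G (proj1_sig s)) -> subG (GS G' (proj1_sig s)) |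
                         normal_mor g}),
        (forall f s x, sv (proj1_sig (Phi f s) x) = proj1_sig f (sv x)) ->
        bij Phi)).
Proof.
  split; [| split].
  - intros G I H hCC [theta [hcan hbij]]. split; [| split].
    + apply (dsum_functor G I H hCC theta hcan hbij (fun _ => True) (fun _ _ _ _ => Logic.I) (@soc Om)).
      intro X. exact (soc_eq X).
    + intros S _. apply (dsum_functor G I H hCC theta hcan hbij (fun A => iso A S)
        (fun A B h1 h2 => iso_trans (iso_sym h1) h2) (fun X => GS X S)).
      intro X. exact (GS_eq X S).
    + intro X. exact (Supp_dsum G I H hCC theta hcan hbij X).
  - intros G S _. split; [apply GS_soc | apply Supp_soc].
  - intros G G' hss hss'. split.
    + intros f S hf _. apply normal_mor_component; auto.
    + apply normal_hom_components_bij; auto.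
Qed.
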